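(* Let $(\mathcal H,\mathcal B)$ be a commutative nondegenerate combinatorial Hopf algebra over $\mathbb R$, let $\gamma\in(0,1]$ and $N:=\lfloor 1/\gamma\rfloor$. Then every $\gamma$-regular $N$-truncated $\mathcal H$-rough path admits a unique extension to a $\gamma$-regular $\mathcal H$-rough path $\mathbb X$. Moreover, there exists a constant $c>0$ such that $$|\langle\mathbb X_{st},\sigma\rangle|\le c^{|\sigma|}\,q_\gamma(\sigma)\,|t-s|^{\gamma|\sigma|}$$ for all $s,t\in\mathbb R$ and all $\sigma\in\mathcal B$.
   Context: A connected graded Hopf algebra $\mathcal H=\bigoplus_{n\ge0}\mathcal H_n$ has $\mathcal H_0=\mathbb R\mathbf 1$; $|\sigma|$ is the degree of a homogeneous $\sigma$; reduced coproduct $\Delta'(\sigma)=\Delta(\sigma)-\sigma\otimes\mathbf 1-\mathbf 1\otimes\sigma=\sum'_{(\sigma)}\sigma'\otimes\sigma''$ (homogeneous components); convolution $(\phi*\psi)(x)=\sum_{(x)}\phi(x_1)\psi(x_2)$. A combinatorial Hopf algebra $(\mathcal H,\mathcal B)$ is a connected graded Hopf algebra with a basis $\mathcal B=\bigsqcup_n\mathcal B_n$, $\mathcal B_n$ a basis of $\mathcal H_n$, such that $\dim\mathcal H_n\le bC^n$ for some constants $b,C>0$, and the structure constants of product and coproduct in this basis are nonnegative integers. Its inverse-factorial character $q$ is the linear form with $q(\mathbf 1)=1$, $q(\tau)=1$ for $\tau\in\mathcal B_1$, and $q(x)=\frac{1}{2^{|x|}-2}\sum'_{(x)}q(x')q(x'')$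 for homogeneous $x$ of degree $\ge2$. It is nondegenerate if $\mathcal B\cap\mathrm{Prim}(\mathcal H)=\mathcal B_1$. The map $q_\gamma:\mathcal H\to\mathbb R$ is the linear map defined on $\mathcal B$ by $q_\gamma(\sigma)=q(\sigma)$ if $|\sigma|\le N$ and recursively $q_\gamma(\sigma)=\frac{1}{2^{\gamma|\sigma|}-2}\sum'_{(\sigma)}q_\gamma(\sigma')q_\gamma(\sigma'')$ if $|\sigma|\ge N+1$ (note $\gamma(N+1)>1$). A $\gamma$-regular $\mathcal H$-rough path is a family $(\mathbb X_{st})_{s,t\in\mathbb R}$ of linear forms on $\mathcal H$ with $\langle\mathbb X_{st},\mathbf 1\rangle=1$ such that (I) $\langle\mathbb X_{st},\sigma\tau\rangle=\langle\mathbb X_{st},\sigma\rangle\langle\mathbb X_{st},\tau\rangle$ for all $\sigma,\tau\in\mathcal H$; (II) $\mathbb X_{su}*\mathbb X_{ut}=\mathbb X_{st}$ for all $s,u,t$; (III) $\sup_{s\neq t}|\langle\mathbb X_{st},\sigma\rangle|/|t-s|^{\gamma|\sigma|}<\infty$ for every $\sigma\in\mathcal B$. With $\mathcal H^{(N)}=\bigoplus_{k\le N}\mathcal H_k$, a $\gamma$-regular $N$-truncated $\mathcal H$-rough path is a family of linear forms on $\mathcal H^{(N)}$ with $\langle\mathbb X_{st},\mathbf 1\rangle=1$ satisfying (I) for $\sigma\in\mathcal H_p,\tau\in\mathcal H_q$ with $p+q\le N$, (II) with the coproduct restricted to $\mathcal H^{(N)}$, and (III) for $\sigma\in\mathcal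 B_n$, $n\le N$. An extension means a $\gamma$-regular $\mathcal H$-rough path whose restriction to $\mathcal H^{(N)}$ is the given truncated one. *)

From Stdlib Require Import Reals List Arith.
Import ListNotations.
Open Scope R_scope.

Definition nsum {T : Type} (l : list T) (f : T -> nat) : nat :=
  fold_right (fun x acc => (f x + acc)%nat) 0%nat l.
Definition rsum {T : Type} (l : list T) (f : T -> R) : R :=
  fold_right (fun x acc => f x + acc) 0 l.

(* x^a for x >= 0 and real a, with the convention 0^0 = 1, 0^a = 0 (a <> 0). *)
Definition powR (x a : R) : R :=
  if Req_EM_T x 0 then (if Req_EM_T a 0 then 1 else 0) else Rpower x a.

(* A combinatorial Hopf algebra (H,B) over R, presented through its basis B:
   - cB is the basis B, cdeg the degree, cenum n an enumeration of B_n
     (so H_n = span of cenum n, finite dimensional);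
   - cone is the unit 1, which spans H_0 (B_0 = {1});
   - cmul a b c = coefficient of c in the product a*b  (nonneg. integers);
   - ccop a b c = coefficient of a (x) b in Delta(c)    (nonneg. integers);
   - the counit is eps(1) = 1, eps(b) = 0 for deg b > 0.
   The axioms below are the graded bialgebra axioms written on the basis;
   a connected graded bialgebra automatically has an antipode. *)
Record CHA : Type := {
  cB : Type;
  cB_eq_dec : forall x y : cB, {x = y} + {x <> y};
  cdeg : cB -> nat;
  cenum : nat -> list cB;
  cenum_spec : forall n b, In b (cenum n) <-> cdeg b = n;
  cenum_nodup : forall n, NoDup (cenum n);
  cone : cB;
  cdeg_zero : forall b, cdeg b = 0%nat <-> b = cone;
  cmul : cB -> cB -> cB -> nat;
  ccop : cB -> cB -> cB -> nat;
  cmul_graded : forall a b c, cmul a b c <> 0%nat -> cdeg c = (cdeg a + cdeg b)%nat;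
  ccop_graded : forall a b c, ccop a b c <> 0%nat -> (cdeg a + cdeg b)%nat = cdeg c;
  cmul_assoc : forall a b c e,
    nsum (cenum (cdeg a + cdeg b)) (fun x => cmul a b x * cmul x c e)%nat
    = nsum (cenum (cdeg b + cdeg c)) (fun y => cmul b c y * cmul a y e)%nat;
  cmul_unit_l : forall a c, cmul cone a c = if cB_eq_dec c a then 1%nat else 0%nat;
  cmul_unit_r : forall a c, cmul a cone c = if cB_eq_dec c a then 1%nat else 0%nat;
  ccop_coassoc : forall a b c e,
    nsum (cenum (cdeg a + cdeg b)) (fun x => ccop a b x * ccop x c e)%nat
    = nsum (cenum (cdeg b + cdeg c)) (fun y => ccop b c y * ccop a y e)%nat;
  ccop_counit_l : forall b c, ccop cone b c = if cB_eq_dec b c then 1%nat else 0%nat;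
  ccop_counit_r : forall a c, ccop a cone c = if cB_eq_dec a c then 1%nat else 0%nat;
  (* Delta (x y) = Delta(x) Delta(y), coefficient of a (x) b *)
  cbialg : forall x y a b,
    nsum (cenum (cdeg x + cdeg y)) (fun z => cmul x y z * ccop a b z)%nat
    = nsum (seq 0 (S (cdeg x))) (fun p =>
        nsum (seq 0 (S (cdeg y))) (fun r =>
          nsum (cenum p) (fun a1 =>
            nsum (cenum (cdeg x - p)) (fun b1 =>
              nsum (cenum r) (fun a2 =>
                nsum (cenum (cdeg y - r)) (fun b2 =>
                  ccop a1 b1 x * ccop a2 b2 y * cmul a1 a2 a * cmul b1 b2 b))))))%nat;
  cdim_bound : (exists bb C : R, 0 < bb /\ 0 < C /\
    forall n, INR (length (cenum n)) <= bb * C ^ n)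
}.

Arguments cdeg {_} _.
Arguments cenum {_} _.
Arguments cone {_}.
Arguments cmul {_} _ _ _.
Arguments ccop {_} _ _ _.
Arguments cB_eq_dec {_} _ _.

Definition commutativeCHA (H : CHA) : Prop :=
  forall a b c : cB H, cmul a b c = cmul b a c.

Definition primitive (H : CHA) (s : cB H) : Prop :=
  forall a b : cB H,
    ccop a b s =
      ((if cB_eq_dec a s then if cB_eq_dec b cone then 1 else 0 else 0)
     + (if cB_eq_dec a cone then if cB_eq_dec b s then 1 else 0 else 0))%nat.

Definition nondegenerate (H : CHA) : Prop :=
  forall s : cB H, primitive H s <-> cdeg s = 1%nat.

(* Reduced coproduct sum  Σ'_{(x)} f(x') g(x'')  for a basis element x *)
Definition redsum (H : CHA) (f : cB H -> R) (x : cB H) : R :=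
  rsum (seq 1 (cdeg x - 1)) (fun p =>
    rsum (cenum p) (fun a =>
      rsum (cenum (cdeg x - p)) (fun b => INR (ccop a b x) * f a * f b))).

Fixpoint redrec (H : CHA) (N : nat) (base : cB H -> R) (den : nat -> R)
    (fuel : nat) (x : cB H) : R :=
  match fuel with
  | O => base x
  | S k => if Nat.leb (cdeg x) N then base x
           else den (cdeg x) * redsum H (redrec H N base den k) x
  end.

Definition qchar (H : CHA) (x : cB H) : R :=
  redrec H 1 (fun _ => 1) (fun n => / (2 ^ n - 2)) (cdeg x) x.

Definition qgamma (H : CHA) (gamma : R) (N : nat) (x : cB H) : R :=
  redrec H N (qchar H) (fun n => / (Rpower 2 (gamma * INR n) - 2)) (cdeg x) x.

(* Linear forms on H are given by their values on the basis;
   X s t sigma = <X_st, sigma>. *)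
Definition path (H : CHA) := R -> R -> cB H -> R.

Definition multiplicative_upto (H : CHA) (X : path H) (P : nat -> Prop) : Prop :=
  forall s t (a b : cB H), P (cdeg a + cdeg b)%nat ->
    rsum (cenum (cdeg a + cdeg b)) (fun c => INR (cmul a b c) * X s t c)
    = X s t a * X s t b.

Definition chen_upto (H : CHA) (X : path H) (P : nat -> Prop) : Prop :=
  forall s u t (sg : cB H), P (cdeg sg) ->
    rsum (seq 0 (S (cdeg sg))) (fun p =>
      rsum (cenum p) (fun a =>
        rsum (cenum (cdeg sg - p)) (fun b =>
          INR (ccop a b sg) * X s u a * X u t b)))
    = X s t sg.

Definition holder_upto (H : CHA) (gamma : R) (X : path H) (P : nat -> Prop) : Prop :=
  forall sg : cB H, P (cdeg sg) ->
    exists K : R, forall s t, s <> t ->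
      Rabs (X s t sg) <= K * powR (Rabs (t - s)) (gamma * INR (cdeg sg)).

Definition rough_path (H : CHA) (gamma : R) (X : path H) : Prop :=
  (forall s t, X s t cone = 1) /\
  multiplicative_upto H X (fun _ => True) /\
  chen_upto H X (fun _ => True) /\
  holder_upto H gamma X (fun _ => True).

(* N-truncated: only the values on degrees <= N are meaningful *)
Definition truncated_rough_path (H : CHA) (gamma : R) (N : nat) (X : path H) : Prop :=
  (forall s t, X s t cone = 1) /\
  multiplicative_upto H X (fun n => (n <= N)%nat) /\
  chen_upto H X (fun n => (n <= N)%nat) /\
  holder_upto H gamma X (fun n => (n <= N)%nat).

Definition extends (H : CHA) (N : nat) (X Y : path H) : Prop :=
  forall s t (sg : cB H), (cdeg sg <= N)%nat -> X s t sg = Y s t sg.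

(* For [|sg| > N], Chen's relation in degree [|sg|]
   says that [X_st sg - X_su sg - X_ut sg] is the reduced-coproduct term
   [C s u t = sum' X_su sg' X_ut sg''], which only involves lower degrees. Coassociativity
   makes [C] a 2-cocycle, and the bounds already known in lower degrees give
   [|C s u t| <= M max(|u - s|, |t - u|)^th] with [th = gamma |sg| > 1]. The sewing lemma
   then produces the unique [th]-regular [X sg] with coboundary [C], with constant
   [M / (2^th - 2)]: this is exactly the recursion defining [q_gamma].
   Since [Delta (a b) = Delta a Delta b], the multiplicativity defect
   [<X_st, a b> - <X_st, a> <X_st, b>] is additive in [(s, t)] once it vanishes in lower
   degrees, and an additive function bounded by [|t - s|^th] with [th > 1] vanishes; the same
   argument gives uniqueness. *)

From Pilot Require Import Defs.
From Stdlib Require Import Reals List Arith Lia Lra ZArith.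
From Stdlib Require Import Classical ClassicalEpsilon FunctionalExtensionality Setoid Morphisms.
Import ListNotations.
Open Scope R_scope.

Section FiniteSums.
Context {T : Type}.
Implicit Types (l : list T) (f g : T -> R).

Lemma rsum_cons x l f : rsum (x :: l) f = f x + rsum l f.
Proof. reflexivity. Qed.

Lemma rsum_app l1 l2 f : rsum (l1 ++ l2) f = rsum l1 f + rsum l2 f.
Proof. induction l1 as [|x l1 IH]; simpl; [ring|]. unfold rsum in *; simpl; rewrite IH; ring. Qed.

Lemma rsum_ext l f g : (forall x, In x l -> f x = g x) -> rsum l f = rsum l g.
Proof.
  induction l as [|x l IH]; intros Hfg; [reflexivity|].
  rewrite !rsum_cons, (Hfg x (or_introl eq_refl)), IH; [reflexivity|].
  intros y Hy; apply Hfg; right; exact Hy.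
Qed.

Lemma rsum_plus l f g : rsum l (fun x => f x + g x) = rsum l f + rsum l g.
Proof. induction l as [|x l IH]; simpl; [ring|]. unfold rsum in *; simpl; rewrite IH; ring. Qed.

Lemma rsum_scal_l l c f : rsum l (fun x => c * f x) = c * rsum l f.
Proof. induction l as [|x l IH]; simpl; [ring|]. unfold rsum in *; simpl; rewrite IH; ring. Qed.

Lemma rsum_scal_r l c f : rsum l (fun x => f x * c) = rsum l f * c.
Proof. induction l as [|x l IH]; simpl; [ring|]. unfold rsum in *; simpl; rewrite IH; ring. Qed.

Lemma rsum_eq0 l f : (forall x, In x l -> f x = 0) -> rsum l f = 0.
Proof.
  induction l as [|x l IH]; intros Hf; [reflexivity|].
  rewrite rsum_cons, Hf, IH; [ring| |now left]. intros y Hy; apply Hf; now right.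
Qed.

Lemma rsum_le l f g : (forall x, In x l -> f x <= g x) -> rsum l f <= rsum l g.
Proof.
  induction l as [|x l IH]; intros Hfg; simpl; [lra|].
  apply Rplus_le_compat; [apply Hfg; left; reflexivity|].
  apply IH; intros y Hy; apply Hfg; right; exact Hy.
Qed.

Lemma rsum_nonneg l f : (forall x, In x l -> 0 <= f x) -> 0 <= rsum l f.
Proof. intros Hf. rewrite <- (rsum_eq0 l (fun _ => 0)) by auto. now apply rsum_le. Qed.

Lemma rsum_pos l f x0 :
  (forall x, In x l -> 0 <= f x) -> In x0 l -> 0 < f x0 -> 0 < rsum l f.
Proof.
  induction l as [|x l IH]; intros Hf Hx0 Hpos; [destruct Hx0|].
  rewrite rsum_cons.
  assert (0 <= rsum l f) by (apply rsum_nonneg; intros; apply Hf; right; auto).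
  destruct Hx0 as [<-|Hx0]; [lra|].
  assert (0 <= f x) by (apply Hf; left; reflexivity).
  assert (0 < rsum l f) by (apply IH; auto; intros; apply Hf; right; auto).
  lra.
Qed.

Lemma rsum_abs_le l f : Rabs (rsum l f) <= rsum l (fun x => Rabs (f x)).
Proof.
  induction l as [|x l IH]; simpl; [rewrite Rabs_R0; lra|].
  eapply Rle_trans; [apply Rabs_triang|]. lra.
Qed.

Lemma rsum_single l f x0 :
  NoDup l -> In x0 l -> (forall x, In x l -> x <> x0 -> f x = 0) -> rsum l f = f x0.
Proof.
  induction l as [|x l IH]; intros Hnd Hx0 Hz; [destruct Hx0|].
  inversion Hnd as [|? ? Hx Hl]; subst. rewrite rsum_cons. destruct Hx0 as [<-|Hx0].
  - rewrite rsum_eq0; [ring|]. intros y Hy; apply Hz; [now right|]. intros ->; contradiction.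
  - rewrite IH, Hz; [ring|now left| |exact Hl|exact Hx0|].
    + intros ->; contradiction.
    + intros y Hy; apply Hz; now right.
Qed.

Lemma rsum_flat_map {U : Type} (h : U -> list T) (l : list U) f :
  rsum (flat_map h l) f = rsum l (fun u => rsum (h u) f).
Proof. induction l as [|u l IH]; simpl; [reflexivity|]. rewrite rsum_app, IH; reflexivity. Qed.

End FiniteSums.

Lemma rsum_swap {T U : Type} (l1 : list T) (l2 : list U) (f : T -> U -> R) :
  rsum l1 (fun x => rsum l2 (f x)) = rsum l2 (fun y => rsum l1 (fun x => f x y)).
Proof.
  induction l1 as [|x l1 IH].
  - symmetry; apply rsum_eq0; reflexivity.
  - rewrite rsum_cons, IH, <- rsum_plus. apply rsum_ext; reflexivity.
Qed.

Lemma rsum_prod {T U : Type} (l1 : list T) (l2 : list U) f g :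
  rsum l1 (fun x => rsum l2 (fun y => f x * g y)) = rsum l1 f * rsum l2 g.
Proof. rewrite <- rsum_scal_r. apply rsum_ext; intros x _. apply rsum_scal_l. Qed.

Lemma INR_nsum {T : Type} (l : list T) f : INR (nsum l f) = rsum l (fun x => INR (f x)).
Proof. induction l as [|x l IH]; simpl; [reflexivity|]. rewrite plus_INR, IH; reflexivity. Qed.

Lemma rsum_swap2 {T1 T2 T3 : Type} (l1 : list T1) (l2 : list T2) (l3 : list T3)
  (f : T1 -> T2 -> T3 -> R) :
  rsum l1 (fun x => rsum l2 (fun y => rsum l3 (f x y))) =
  rsum l3 (fun w => rsum l1 (fun x => rsum l2 (fun y => f x y w))).
Proof.
  transitivity (rsum l1 (fun x => rsum l3 (fun w => rsum l2 (fun y => f x y w)))).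
  - apply rsum_ext; intros x _. apply rsum_swap.
  - apply rsum_swap.
Qed.

#[local] Instance rsum_proper {T : Type} :
  Proper (eq ==> pointwise_relation T eq ==> eq) (@rsum T).
Proof. intros l l' <- f g Hfg. apply rsum_ext; intros; apply Hfg. Qed.
(** * Convolution on a graded basis *)

Section GradedBasis.
Context {H : CHA}.
Notation B := (cB H).
Implicit Types (a b c x y s : B) (F G K : B -> R).

Ltac case_basis_eq :=
  repeat match goal with |- context [cB_eq_dec ?x ?y] =>
    destruct (cB_eq_dec x y); try subst end;
  try congruence; simpl; try ring.

Definition basis_le (n : nat) : list B := flat_map (@cenum H) (seq 0 (S n)).

Lemma in_basis_le n x : In x (basis_le n) <-> (cdeg x <= n)%nat.
Proof.
  unfold basis_le; rewrite in_flat_map. split.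
  - intros [p [Hp Hx]]. apply in_seq in Hp. apply cenum_spec in Hx. lia.
  - intros Hx. exists (cdeg x). rewrite in_seq, cenum_spec. split; [lia|reflexivity].
Qed.

Lemma cdeg_cone : cdeg (@cone H) = 0%nat.
Proof. now apply cdeg_zero. Qed.

Lemma cdeg_ge1 a : a <> cone -> (1 <= cdeg a)%nat.
Proof. intros Ha. destruct (cdeg a) eqn:E; [now apply cdeg_zero in E|lia]. Qed.

Lemma ccop_eq0 a b c : (cdeg a + cdeg b)%nat <> cdeg c -> ccop a b c = 0%nat.
Proof.
  intros Hd. destruct (Nat.eq_dec (ccop a b c) 0) as [E|E]; [exact E|].
  exfalso; apply Hd, ccop_graded, E.
Qed.

Lemma ccop_INR_eq0 a b c : (cdeg a + cdeg b)%nat <> cdeg c -> INR (ccop a b c) = 0.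
Proof. intros Hd. now rewrite ccop_eq0. Qed.

Lemma cmul_INR_eq0 a b c : cdeg c <> (cdeg a + cdeg b)%nat -> INR (cmul a b c) = 0.
Proof.
  intros Hd. destruct (Nat.eq_dec (cmul a b c) 0) as [->|E]; [reflexivity|].
  exfalso; apply Hd, cmul_graded, E.
Qed.

Lemma rsum_basis_le n f :
  rsum (basis_le n) f = rsum (seq 0 (S n)) (fun p => rsum (cenum p) f).
Proof. apply rsum_flat_map. Qed.

Lemma rsum_basis_le_graded n d f : (d <= n)%nat ->
  (forall x, cdeg x <> d -> f x = 0) -> rsum (basis_le n) f = rsum (cenum d) f.
Proof.
  intros Hd Hf. rewrite rsum_basis_le.
  rewrite (rsum_single _ _ d); [reflexivity|apply seq_NoDup|apply in_seq; lia|].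
  intros p _ Hp. apply rsum_eq0. intros x Hx. apply cenum_spec in Hx. apply Hf; lia.
Qed.

Lemma rsum_basis_le_widen n m f : (n <= m)%nat ->
  (forall x, (n < cdeg x)%nat -> f x = 0) -> rsum (basis_le m) f = rsum (basis_le n) f.
Proof.
  intros Hnm Hf. unfold basis_le. replace (S m) with (S n + (m - n))%nat by lia.
  rewrite seq_app, flat_map_app, rsum_app, (rsum_eq0 (flat_map _ (seq (0 + S n) _))); [ring|].
  intros x Hx. apply in_flat_map in Hx as [p [Hp Hx]].
  apply in_seq in Hp. apply cenum_spec in Hx. apply Hf; lia.
Qed.

Lemma rsum_basis_le_single n f x0 : (cdeg x0 <= n)%nat ->
  (forall x, x <> x0 -> f x = 0) -> rsum (basis_le n) f = f x0.
Proof.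
  intros Hx0 Hf. rewrite (rsum_basis_le_graded n (cdeg x0)); [|exact Hx0|].
  - apply rsum_single; [apply cenum_nodup|now apply cenum_spec|auto].
  - intros x Hx; apply Hf; intros ->; contradiction.
Qed.

Definition conv F G s : R :=
  rsum (basis_le (cdeg s)) (fun a => rsum (basis_le (cdeg s)) (fun b =>
    INR (ccop a b s) * F a * G b)).

Definition red F G s : R :=
  rsum (basis_le (cdeg s)) (fun a => rsum (basis_le (cdeg s)) (fun b =>
    if cB_eq_dec a cone then 0 else if cB_eq_dec b cone then 0 else
    INR (ccop a b s) * F a * G b)).

Lemma graded_pair_sum d m (Phi : B -> B -> R) : (d <= m)%nat ->
  (forall a b, (cdeg a + cdeg b)%nat <> d -> Phi a b = 0) ->
  rsum (seq 0 (S d)) (fun p => rsum (cenum p) (fun a => rsum (cenum (d - p)) (Phi a)))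
  = rsum (basis_le m) (fun a => rsum (basis_le m) (Phi a)).
Proof.
  intros Hdm HPhi. rewrite (rsum_basis_le_widen d m); [|exact Hdm|].
  - rewrite rsum_basis_le. apply rsum_ext; intros p Hp. apply in_seq in Hp.
    apply rsum_ext; intros a Ha. apply cenum_spec in Ha.
    rewrite (rsum_basis_le_widen d m), (rsum_basis_le_graded d (d - p)); try lia; auto.
    + intros b Hb. apply HPhi. lia.
    + intros b Hb. apply HPhi. lia.
  - intros a Ha. apply rsum_eq0; intros b _. apply HPhi. lia.
Qed.

Lemma conv_widen m F G s : (cdeg s <= m)%nat ->
  conv F G s = rsum (basis_le m) (fun a => rsum (basis_le m) (fun b =>
    INR (ccop a b s) * F a * G b)).
Proof.
  intros Hm. unfold conv. symmetry. rewrite (rsum_basis_le_widen (cdeg s) m); [|exact Hm|].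
  - apply rsum_ext; intros a _. apply rsum_basis_le_widen; [exact Hm|].
    intros b Hb. rewrite ccop_INR_eq0 by lia. ring.
  - intros a Ha. apply rsum_eq0; intros b _. rewrite ccop_INR_eq0 by lia. ring.
Qed.

Lemma conv_graded_sum F G s :
  rsum (seq 0 (S (cdeg s))) (fun p => rsum (cenum p) (fun a =>
    rsum (cenum (cdeg s - p)) (fun b => INR (ccop a b s) * F a * G b)))
  = conv F G s.
Proof.
  apply graded_pair_sum; [lia|]. intros a b Hab. rewrite ccop_INR_eq0 by exact Hab. ring.
Qed.

Lemma conv_ext F G F' G' s :
  (forall a, (cdeg a <= cdeg s)%nat -> F a = F' a /\ G a = G' a) ->
  conv F G s = conv F' G' s.
Proof.
  intros E. apply rsum_ext; intros a Ha. apply rsum_ext; intros b Hb.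
  apply in_basis_le in Ha, Hb. now rewrite (proj1 (E a Ha)), (proj2 (E b Hb)).
Qed.

Lemma red_ext F G F' G' s :
  (forall a, (1 <= cdeg a < cdeg s)%nat -> F a = F' a /\ G a = G' a) ->
  red F G s = red F' G' s.
Proof.
  intros E. apply rsum_ext; intros a _. apply rsum_ext; intros b _.
  destruct (cB_eq_dec a cone) as [|Ha]; [reflexivity|].
  destruct (cB_eq_dec b cone) as [|Hb]; [reflexivity|].
  destruct (Nat.eq_dec (cdeg a + cdeg b) (cdeg s)) as [Hab|Hab];
    [|rewrite ccop_INR_eq0 by exact Hab; ring].
  pose proof (cdeg_ge1 a Ha); pose proof (cdeg_ge1 b Hb).
  rewrite (proj1 (E a ltac:(lia))), (proj2 (E b ltac:(lia))). reflexivity.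
Qed.

Lemma conv_cone F G : conv F G cone = F cone * G cone.
Proof.
  unfold conv. rewrite cdeg_cone.
  rewrite (rsum_basis_le_single 0 _ cone), (rsum_basis_le_single 0 _ cone);
    rewrite ?cdeg_cone; auto.
  - rewrite ccop_counit_l. case_basis_eq.
  - intros b Hb. rewrite ccop_counit_l. case_basis_eq.
  - intros a Ha. apply rsum_eq0. intros b Hb. apply in_basis_le in Hb.
    rewrite ccop_INR_eq0; [ring|]. rewrite cdeg_cone. intros E.
    apply Ha, cdeg_zero. lia.
Qed.

Lemma conv_split s F G : s <> cone ->
  conv F G s = F s * G cone + F cone * G s + red F G s.
Proof.
  intros Hs. unfold conv, red.
  set (n := cdeg s). set (L := basis_le n).
  rewrite (rsum_ext _ _ (fun a => rsum L (fun b =>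
     (if cB_eq_dec b cone then if cB_eq_dec a s then F s * G cone else 0 else 0)
   + (if cB_eq_dec a cone then if cB_eq_dec b s then F cone * G s else 0 else 0)
   + (if cB_eq_dec a cone then 0 else if cB_eq_dec b cone then 0 else
        INR (ccop a b s) * F a * G b)))).
  2:{ intros a _. apply rsum_ext; intros b _.
      destruct (cB_eq_dec a cone) as [->|Ha].
      - rewrite ccop_counit_l. case_basis_eq.
      - destruct (cB_eq_dec b cone) as [->|Hb]; [rewrite ccop_counit_r|]; case_basis_eq. }
  rewrite (rsum_ext _ _ (fun a =>
      rsum L (fun b => if cB_eq_dec b cone then if cB_eq_dec a s then F s * G cone else 0 else 0)
    + rsum L (fun b => if cB_eq_dec a cone then if cB_eq_dec b s then F cone * G s else 0 else 0)
    + rsum L (fun b => if cB_eq_dec a cone then 0 else if cB_eq_dec b cone then 0 else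
        INR (ccop a b s) * F a * G b)))
    by (intros; rewrite <- !rsum_plus; reflexivity).
  assert (Hc : (cdeg (@cone H) <= n)%nat) by (rewrite cdeg_cone; lia).
  rewrite !rsum_plus. unfold L. f_equal. f_equal.
  - rewrite (rsum_basis_le_single _ _ s); [|unfold n; lia|].
    + rewrite (rsum_basis_le_single _ _ cone Hc); [case_basis_eq|].
      intros b Hb; case_basis_eq.
    + intros a Ha. apply rsum_eq0; intros; case_basis_eq.
  - rewrite (rsum_basis_le_single _ _ cone Hc).
    + rewrite (rsum_basis_le_single _ _ s); [case_basis_eq|unfold n; lia|].
      intros b Hb; case_basis_eq.
    + intros a Ha. apply rsum_eq0; intros; case_basis_eq.
Qed.

Lemma seq_0_split d : (1 <= d)%nat -> seq 0 (S d) = 0%nat :: seq 1 (d - 1) ++ [d].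
Proof.
  intros Hd. replace (S d) with (1 + (d - 1) + 1)%nat by lia.
  rewrite !seq_app. simpl. do 2 f_equal. f_equal. lia.
Qed.

Lemma redsum_red f x : redsum H f x = red f f x.
Proof.
  unfold red, redsum. set (d := cdeg x).
  set (Phi := fun a b => if cB_eq_dec a cone then 0 else if cB_eq_dec b cone then 0 else
                         INR (ccop a b x) * f a * f b).
  transitivity (rsum (seq 0 (S d)) (fun p => rsum (cenum p) (fun a => rsum (cenum (d - p)) (Phi a)))).
  2:{ apply graded_pair_sum; [lia|]. intros a b Hab. unfold Phi.
      case_basis_eq. rewrite ccop_INR_eq0 by exact Hab. ring. }
  clearbody d.
  assert (Hcone : rsum (cenum 0) (fun a : B => rsum (cenum (d - 0)) (Phi a)) = 0).
  { apply rsum_eq0; intros a Ha. apply cenum_spec, cdeg_zero in Ha as ->.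
    apply rsum_eq0; intros. unfold Phi; case_basis_eq. }
  destruct (Nat.eq_dec d 0) as [E|E].
  - subst d. cbn [seq]. rewrite rsum_cons, Hcone. simpl. ring.
  - rewrite (seq_0_split d), rsum_cons, rsum_app, Hcone by lia.
    rewrite rsum_cons, (rsum_eq0 (cenum d)).
    2:{ intros a _. apply rsum_eq0; intros b Hb. rewrite Nat.sub_diag in Hb.
        apply cenum_spec, cdeg_zero in Hb as ->. unfold Phi; case_basis_eq. }
    simpl rsum at 3. rewrite Rplus_0_l, !Rplus_0_r. apply rsum_ext; intros p Hp. apply in_seq in Hp.
    apply rsum_ext; intros a Ha. apply rsum_ext; intros b Hb.
    apply cenum_spec in Ha, Hb. unfold Phi.
    destruct (cB_eq_dec a cone) as [->|]; [rewrite cdeg_cone in Ha; lia|].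
    destruct (cB_eq_dec b cone) as [->|]; [rewrite cdeg_cone in Hb; lia|].
    reflexivity.
Qed.

Lemma rsum_basis_le_nsum n m (phi : B -> nat) :
  (forall x, cdeg x <> m -> phi x = 0%nat) -> (forall x, (n < cdeg x)%nat -> phi x = 0%nat) ->
  rsum (basis_le n) (fun x => INR (phi x)) = INR (nsum (cenum m) phi).
Proof.
  intros Hm Hn. rewrite INR_nsum. destruct (le_lt_dec m n) as [Hmn|Hmn].
  - apply rsum_basis_le_graded; [exact Hmn|]. intros x Hx. now rewrite Hm.
  - rewrite !rsum_eq0; [reflexivity| |].
    + intros x Hx. apply cenum_spec in Hx. rewrite Hn by lia. reflexivity.
    + intros x Hx. apply in_basis_le in Hx. rewrite Hm by lia. reflexivity.
Qed.

Lemma conv_conv_l F G K s : conv (conv F G) K s =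
  let L := basis_le (cdeg s) in
  rsum L (fun a => rsum L (fun b => rsum L (fun c =>
    F a * G b * K c * INR (nsum (cenum (cdeg a + cdeg b)) (fun x => ccop a b x * ccop x c s)%nat)))).
Proof.
  set (n := cdeg s). set (L := basis_le n). unfold conv at 1. fold n L. cbv zeta.
  transitivity (rsum L (fun x => rsum L (fun c => rsum L (fun a => rsum L (fun b =>
    F a * G b * K c * INR (ccop a b x * ccop x c s)))))).
  { apply rsum_ext; intros x Hx. apply in_basis_le in Hx. apply rsum_ext; intros c _.
    rewrite (conv_widen n) by exact Hx. rewrite <- rsum_scal_l, <- rsum_scal_r.
    apply rsum_ext; intros a _. rewrite <- rsum_scal_l, <- rsum_scal_r.
    apply rsum_ext; intros b _. rewrite mult_INR. ring. }
  rewrite rsum_swap.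
  transitivity (rsum L (fun c => rsum L (fun a => rsum L (fun b => rsum L (fun x =>
    F a * G b * K c * INR (ccop a b x * ccop x c s)))))).
  { apply rsum_ext; intros c _. rewrite rsum_swap. apply rsum_ext; intros a _. apply rsum_swap. }
  rewrite rsum_swap. apply rsum_ext; intros a _. rewrite rsum_swap. apply rsum_ext; intros b _.
  apply rsum_ext; intros c _. rewrite rsum_scal_l. f_equal. apply rsum_basis_le_nsum.
  - intros x Hx. rewrite ccop_eq0 by lia. reflexivity.
  - intros x Hx. rewrite (ccop_eq0 x c s) by (unfold n in Hx; lia). lia.
Qed.

Lemma conv_conv_r F G K s : conv F (conv G K) s =
  let L := basis_le (cdeg s) in
  rsum L (fun a => rsum L (fun b => rsum L (fun c =>
    F a * G b * K c * INR (nsum (cenum (cdeg b + cdeg c)) (fun y => ccop b c y * ccop a y s)%nat)))).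
Proof.
  set (n := cdeg s). set (L := basis_le n). unfold conv at 1. fold n L. cbv zeta.
  apply rsum_ext; intros a _.
  transitivity (rsum L (fun b => rsum L (fun y => rsum L (fun c =>
    F a * G b * K c * INR (ccop b c y * ccop a y s))))).
  2:{ apply rsum_ext; intros b _. rewrite rsum_swap. apply rsum_ext; intros c _.
      rewrite rsum_scal_l. f_equal. apply rsum_basis_le_nsum.
      - intros y Hy. rewrite ccop_eq0 by lia. reflexivity.
      - intros y Hy. rewrite (ccop_eq0 a y s) by (unfold n in Hy; lia). lia. }
  rewrite rsum_swap. apply rsum_ext; intros y Hy. apply in_basis_le in Hy.
  rewrite (conv_widen n) by exact Hy. rewrite <- rsum_scal_l.
  apply rsum_ext; intros b _. rewrite <- rsum_scal_l.
  apply rsum_ext; intros c _. rewrite mult_INR. ring.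
Qed.

Lemma conv_assoc F G K s : conv (conv F G) K s = conv F (conv G K) s.
Proof.
  rewrite conv_conv_l, conv_conv_r. cbv zeta.
  do 3 (apply rsum_ext; intros ? _). now rewrite ccop_coassoc.
Qed.

Lemma red_abs_le F G w P s :
  (forall a b, a <> cone -> b <> cone -> (cdeg a + cdeg b)%nat = cdeg s ->
     Rabs (F a * G b) <= w a * w b * P) ->
  Rabs (red F G s) <= red w w s * P.
Proof.
  intros Hab. unfold red. rewrite <- rsum_scal_r.
  eapply Rle_trans; [apply rsum_abs_le|]. apply rsum_le; intros a _.
  rewrite <- rsum_scal_r. eapply Rle_trans; [apply rsum_abs_le|]. apply rsum_le; intros b _.
  destruct (cB_eq_dec a cone); [rewrite Rabs_R0; lra|].
  destruct (cB_eq_dec b cone); [rewrite Rabs_R0; lra|].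
  destruct (Nat.eq_dec (cdeg a + cdeg b) (cdeg s)) as [E|E].
  - rewrite Rmult_assoc, Rabs_mult, Rabs_right by (apply Rle_ge, pos_INR).
    rewrite !Rmult_assoc. apply Rmult_le_compat_l; [apply pos_INR|].
    rewrite <- Rmult_assoc. auto.
  - rewrite ccop_INR_eq0 by exact E. rewrite !Rmult_0_l, Rabs_R0. lra.
Qed.

Lemma red_term_nonneg w s a b :
  (forall x, (1 <= cdeg x < cdeg s)%nat -> 0 <= w x) ->
  0 <= (if cB_eq_dec a cone then 0 else if cB_eq_dec b cone then 0 else
        INR (ccop a b s) * w a * w b).
Proof.
  intros Hw. destruct (cB_eq_dec a cone) as [|Ha]; [lra|].
  destruct (cB_eq_dec b cone) as [|Hb]; [lra|].
  destruct (Nat.eq_dec (cdeg a + cdeg b) (cdeg s)) as [E|E];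
    [|rewrite ccop_INR_eq0 by exact E; lra].
  pose proof (cdeg_ge1 a Ha); pose proof (cdeg_ge1 b Hb).
  apply Rmult_le_pos; [apply Rmult_le_pos|]; [apply pos_INR|apply Hw; lia|apply Hw; lia].
Qed.

Lemma red_nonneg w s :
  (forall a, (1 <= cdeg a < cdeg s)%nat -> 0 <= w a) -> 0 <= red w w s.
Proof.
  intros Hw. apply rsum_nonneg; intros a _. apply rsum_nonneg; intros b _.
  now apply red_term_nonneg.
Qed.

Lemma nondegenerate_split s : nondegenerate H -> (2 <= cdeg s)%nat ->
  exists a b, a <> cone /\ b <> cone /\ ccop a b s <> 0%nat.
Proof.
  intros Hnd Hs. assert (Hprim : ~ Defs.primitive H s) by (intros P; apply Hnd in P; lia).
  apply not_all_ex_not in Hprim as [a Ha]. apply not_all_ex_not in Ha as [b Hab].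
  assert (Hs1 : s <> cone) by (intros ->; rewrite cdeg_cone in Hs; lia).
  exists a, b. destruct (cB_eq_dec a cone) as [->|Ha].
  { exfalso; apply Hab. rewrite ccop_counit_l. case_basis_eq. }
  destruct (cB_eq_dec b cone) as [->|Hb].
  { exfalso; apply Hab. rewrite ccop_counit_r. case_basis_eq. }
  repeat split; auto. intros E; apply Hab. rewrite E. case_basis_eq.
Qed.

Lemma red_pos w s : nondegenerate H -> (2 <= cdeg s)%nat ->
  (forall a, (1 <= cdeg a < cdeg s)%nat -> 0 < w a) -> 0 < red w w s.
Proof.
  intros Hnd Hs Hw. destruct (nondegenerate_split s Hnd Hs) as [a [b [Ha [Hb Hab]]]].
  assert (Hd := ccop_graded H a b s Hab).
  pose proof (cdeg_ge1 a Ha); pose proof (cdeg_ge1 b Hb).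
  assert (Hw0 : forall x, (1 <= cdeg x < cdeg s)%nat -> 0 <= w x) by (intros x Hx; left; auto).
  apply rsum_pos with a; [intros; apply rsum_nonneg; intros; now apply red_term_nonneg|
                          apply in_basis_le; lia|].
  apply rsum_pos with b; [intros; now apply red_term_nonneg|apply in_basis_le; lia|].
  case_basis_eq. apply Rmult_lt_0_compat; [apply Rmult_lt_0_compat|];
    [apply lt_0_INR; lia|apply Hw; lia|apply Hw; lia].
Qed.

(* Coassociativity of [conv] read off in the top degree of [s]. *)
Lemma red_cocycle U V W UV VW s : s <> cone ->
  U cone = 1 -> V cone = 1 -> W cone = 1 ->
  (forall a, (cdeg a < cdeg s)%nat -> UV a = conv U V a /\ VW a = conv V W a) ->
  red UV W s + red U V s = red U VW s + red V W s.
Proof.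
  intros Hs HU HV HW Hlow. pose proof (conv_assoc U V W s) as E.
  rewrite !(conv_split s) in E by exact Hs. rewrite !conv_cone, HU, HV, HW in E.
  rewrite (red_ext (conv U V) W UV W), (red_ext U (conv V W) U VW) in E.
  - lra.
  - intros a Ha. split; [reflexivity|]. symmetry; apply Hlow; lia.
  - intros a Ha. split; [|reflexivity]. symmetry; apply Hlow; lia.
Qed.

Lemma conv_idempotent_eq0 Z n : Z cone = 1 ->
  (forall s, (cdeg s <= n)%nat -> Z s = conv Z Z s) ->
  forall s, (1 <= cdeg s <= n)%nat -> Z s = 0.
Proof.
  intros H1 HZ s. remember (cdeg s) as d eqn:Ed. revert s Ed.
  induction d as [d IH] using lt_wf_ind. intros s Ed Hd.
  assert (Hs : s <> cone) by (intros ->; rewrite cdeg_cone in Ed; lia).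
  pose proof (HZ s ltac:(lia)) as E. rewrite conv_split, H1 in E by exact Hs.
  rewrite (red_ext Z Z (fun _ => 0) (fun _ => 0)) in E.
  - assert (Hr : red (fun _ => 0) (fun _ => 0) s = 0).
    { apply rsum_eq0; intros; apply rsum_eq0; intros; case_basis_eq. }
    lra.
  - intros a Ha. split; apply (IH (cdeg a)); auto; lia.
Qed.

Section Recursion.
Variables (N : nat) (base : B -> R) (den : nat -> R).
Notation rec k := (redrec H N base den k).

Lemma redrec_fuel k k' s : (cdeg s <= k)%nat -> (cdeg s <= k')%nat -> rec k s = rec k' s.
Proof.
  revert k' s. induction k as [|k IH]; intros k' s Hk Hk'.
  - destruct k'; [reflexivity|]. simpl. replace (cdeg s) with 0%nat by lia. reflexivity.
  - destruct k' as [|k'].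
    + simpl. replace (cdeg s) with 0%nat by lia. reflexivity.
    + simpl. destruct (Nat.leb (cdeg s) N); [reflexivity|]. f_equal. rewrite !redsum_red.
      apply red_ext. intros a Ha. split; apply IH; lia.
Qed.

Lemma redrec_unfold s : rec (cdeg s) s =
  if Nat.leb (cdeg s) N then base s
  else den (cdeg s) * red (fun a => rec (cdeg a) a) (fun a => rec (cdeg a) a) s.
Proof.
  destruct (cdeg s) as [|d] eqn:E; [reflexivity|]. cbn [redrec]. rewrite E.
  destruct (Nat.leb (S d) N); [reflexivity|]. rewrite redsum_red. f_equal.
  apply red_ext. intros a Ha. split; apply redrec_fuel; lia.
Qed.

Hypothesis den_pos : forall n, (N < n)%nat -> 0 < den n.

Lemma redrec_nonneg s : (forall x, 0 <= base x) -> 0 <= rec (cdeg s) s.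
Proof.
  intros Hbase. remember (cdeg s) as d eqn:Ed. revert s Ed.
  induction d as [d IH] using lt_wf_ind. intros s ->.
  rewrite redrec_unfold. destruct (Nat.leb (cdeg s) N) eqn:E; [apply Hbase|].
  apply Nat.leb_gt in E. apply Rmult_le_pos; [left; now apply den_pos|].
  apply red_nonneg. intros a Ha. apply (IH (cdeg a)); [lia|reflexivity].
Qed.

Lemma redrec_pos s : nondegenerate H -> (1 <= N)%nat ->
  (forall x, (1 <= cdeg x)%nat -> 0 < base x) -> (1 <= cdeg s)%nat -> 0 < rec (cdeg s) s.
Proof.
  intros Hnd HN Hbase. remember (cdeg s) as d eqn:Ed. revert s Ed.
  induction d as [d IH] using lt_wf_ind. intros s -> Hs.
  rewrite redrec_unfold. destruct (Nat.leb (cdeg s) N) eqn:E; [now apply Hbase|].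
  apply Nat.leb_gt in E. apply Rmult_lt_0_compat; [now apply den_pos|].
  apply red_pos; [exact Hnd|lia|]. intros a Ha. apply (IH (cdeg a)); [lia|reflexivity|lia].
Qed.

End Recursion.

Lemma pow2_sub2_pos n : (1 < n)%nat -> 0 < 2 ^ n - 2.
Proof.
  intros Hn. replace n with (S (S (n - 2))) by lia. simpl.
  assert (1 <= 2 ^ (n - 2)) by (apply pow_R1_Rle; lra). lra.
Qed.

Lemma qchar_unfold s : qchar H s =
  if Nat.leb (cdeg s) 1 then 1 else / (2 ^ cdeg s - 2) * red (qchar H) (qchar H) s.
Proof. apply redrec_unfold. Qed.

Lemma qchar_pos s : nondegenerate H -> (1 <= cdeg s)%nat -> 0 < qchar H s.
Proof.
  intros Hnd Hs. apply redrec_pos; auto; [|intros; lra].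
  intros n Hn. now apply Rinv_0_lt_compat, pow2_sub2_pos.
Qed.

Lemma qchar_nonneg s : 0 <= qchar H s.
Proof.
  apply redrec_nonneg; [|intros; lra].
  intros n Hn. now apply Rinv_0_lt_compat, pow2_sub2_pos.
Qed.

Lemma qgamma_unfold gamma N s : qgamma H gamma N s =
  if Nat.leb (cdeg s) N then qchar H s
  else / (Rpower 2 (gamma * INR (cdeg s)) - 2) * red (qgamma H gamma N) (qgamma H gamma N) s.
Proof. apply redrec_unfold. Qed.

Lemma qgamma_nonneg gamma N s :
  (forall n, (N < n)%nat -> 2 < Rpower 2 (gamma * INR n)) -> 0 <= qgamma H gamma N s.
Proof.
  intros Hg. apply redrec_nonneg; [|apply qchar_nonneg].
  intros n Hn. apply Rinv_0_lt_compat. specialize (Hg n Hn). lra.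
Qed.

Lemma cbialg_basis_le x y a b m : (cdeg x + cdeg y <= m)%nat ->
  rsum (basis_le m) (fun z => INR (cmul x y z) * INR (ccop a b z)) =
  rsum (basis_le m) (fun a1 => rsum (basis_le m) (fun b1 =>
    rsum (basis_le m) (fun a2 => rsum (basis_le m) (fun b2 =>
      INR (ccop a1 b1 x) * INR (ccop a2 b2 y) * INR (cmul a1 a2 a) * INR (cmul b1 b2 b))))).
Proof.
  intros Hm. pose proof (f_equal INR (cbialg H x y a b)) as E.
  repeat setoid_rewrite INR_nsum in E. repeat setoid_rewrite mult_INR in E.
  rewrite (rsum_basis_le_graded m (cdeg x + cdeg y)), E; [|exact Hm|].
  2:{ intros z Hz. rewrite cmul_INR_eq0 by exact Hz. ring. }
  set (L := basis_le m).
  transitivity (rsum (seq 0 (S (cdeg x))) (fun p => rsum (cenum p) (fun a1 =>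
    rsum (cenum (cdeg x - p)) (fun b1 => rsum L (fun a2 => rsum L (fun b2 =>
      INR (ccop a1 b1 x) * INR (ccop a2 b2 y) * INR (cmul a1 a2 a) * INR (cmul b1 b2 b))))))).
  - apply rsum_ext; intros p _. rewrite rsum_swap. apply rsum_ext; intros a1 _.
    rewrite rsum_swap. apply rsum_ext; intros b1 _.
    apply graded_pair_sum; [lia|]. intros a2 b2 Hd. rewrite (ccop_INR_eq0 a2 b2 y) by exact Hd. ring.
  - apply graded_pair_sum; [lia|]. intros a1 b1 Hd. apply rsum_eq0; intros; apply rsum_eq0; intros.
    rewrite (ccop_INR_eq0 a1 b1 x) by exact Hd. ring.
Qed.

Definition mul_eval U x y : R :=
  rsum (basis_le (cdeg x + cdeg y)) (fun z => INR (cmul x y z) * U z).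

Definition mul_defect U x y : R := mul_eval U x y - U x * U y.

Lemma mul_eval_widen m U x y : (cdeg x + cdeg y <= m)%nat ->
  rsum (basis_le m) (fun z => INR (cmul x y z) * U z) = mul_eval U x y.
Proof.
  intros Hm. apply rsum_basis_le_widen; [exact Hm|].
  intros z Hz. rewrite cmul_INR_eq0 by lia. ring.
Qed.

Lemma mul_eval_ext U U' x y : (forall z, cdeg z = (cdeg x + cdeg y)%nat -> U z = U' z) ->
  mul_eval U x y = mul_eval U' x y.
Proof.
  intros E. apply rsum_ext; intros z _.
  destruct (Nat.eq_dec (cdeg z) (cdeg x + cdeg y)) as [Hz|Hz].
  - now rewrite E.
  - rewrite cmul_INR_eq0 by exact Hz. ring.
Qed.

Lemma mul_eval_cone_l U y : mul_eval U cone y = U y.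
Proof.
  unfold mul_eval. rewrite (rsum_basis_le_single _ _ y), cmul_unit_l; [case_basis_eq|lia|].
  intros z Hz. rewrite cmul_unit_l. case_basis_eq.
Qed.

Lemma mul_eval_cone_r U x : mul_eval U x cone = U x.
Proof.
  unfold mul_eval. rewrite (rsum_basis_le_single _ _ x), cmul_unit_r; [case_basis_eq|lia|].
  intros z Hz. rewrite cmul_unit_r. case_basis_eq.
Qed.

Definition coprod2_sum a b (f : B -> B -> B -> B -> R) : R :=
  let L := basis_le (cdeg a + cdeg b) in
  rsum L (fun a1 => rsum L (fun b1 => rsum L (fun a2 => rsum L (fun b2 =>
    INR (ccop a1 b1 a) * INR (ccop a2 b2 b) * f a1 b1 a2 b2)))).

Lemma coprod2_sum_ext a b f g :
  (forall a1 b1 a2 b2, (cdeg a1 + cdeg b1)%nat = cdeg a -> (cdeg a2 + cdeg b2)%nat = cdeg b ->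
     f a1 b1 a2 b2 = g a1 b1 a2 b2) ->
  coprod2_sum a b f = coprod2_sum a b g.
Proof.
  intros E. do 4 (apply rsum_ext; intros ? _).
  match goal with |- context [ccop ?a1 ?b1 a] =>
    destruct (Nat.eq_dec (cdeg a1 + cdeg b1) (cdeg a)) as [E1|E1];
    [|rewrite (ccop_INR_eq0 a1 b1 a E1); ring] end.
  match goal with |- context [ccop ?a2 ?b2 b] =>
    destruct (Nat.eq_dec (cdeg a2 + cdeg b2) (cdeg b)) as [E2|E2];
    [|rewrite (ccop_INR_eq0 a2 b2 b E2); ring] end.
  now rewrite E.
Qed.

Lemma coprod2_sum_plus a b f g :
  coprod2_sum a b (fun a1 b1 a2 b2 => f a1 b1 a2 b2 + g a1 b1 a2 b2)
  = coprod2_sum a b f + coprod2_sum a b g.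
Proof.
  unfold coprod2_sum. rewrite <- rsum_plus. apply rsum_ext; intros. rewrite <- rsum_plus.
  apply rsum_ext; intros. rewrite <- rsum_plus. apply rsum_ext; intros. rewrite <- rsum_plus.
  apply rsum_ext; intros. ring.
Qed.

Lemma coprod2_sum_tensor a b U V :
  coprod2_sum a b (fun a1 b1 a2 b2 => U a1 * V b1 * (U a2 * V b2)) = conv U V a * conv U V b.
Proof.
  unfold coprod2_sum. rewrite (conv_widen (cdeg a + cdeg b) U V a), (conv_widen (cdeg a + cdeg b) U V b) by lia.
  rewrite <- rsum_scal_r. apply rsum_ext; intros a1 _. rewrite <- rsum_scal_r.
  apply rsum_ext; intros b1 _. rewrite <- rsum_scal_l. apply rsum_ext; intros a2 _.
  rewrite <- rsum_scal_l. apply rsum_ext; intros b2 _. ring.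
Qed.

Lemma coprod2_sum_defect_l a b D E :
  (forall x y, (cdeg x + cdeg y < cdeg a + cdeg b)%nat -> D x y = 0) ->
  coprod2_sum a b (fun a1 b1 a2 b2 => D a1 a2 * E b1 b2) = D a b * E cone cone.
Proof.
  intros HD. unfold coprod2_sum. cbv zeta.
  assert (Hz : forall a1 b1 a2 b2, b1 <> cone \/ b2 <> cone ->
            INR (ccop a1 b1 a) * INR (ccop a2 b2 b) * (D a1 a2 * E b1 b2) = 0).
  { intros a1 b1 a2 b2 Hb.
    destruct (Nat.eq_dec (cdeg a1 + cdeg b1) (cdeg a)) as [E1|E1];
      [|rewrite (ccop_INR_eq0 a1 b1 a E1); ring].
    destruct (Nat.eq_dec (cdeg a2 + cdeg b2) (cdeg b)) as [E2|E2];
      [|rewrite (ccop_INR_eq0 a2 b2 b E2); ring].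
    rewrite HD; [ring|]. destruct Hb as [Hb|Hb]; apply cdeg_ge1 in Hb; lia. }
  rewrite (rsum_basis_le_single _ _ a); [|lia|].
  2:{ intros a1 Ha1. apply rsum_eq0; intros b1 _. destruct (cB_eq_dec b1 cone) as [->|Hb1].
      - rewrite ccop_counit_r. apply rsum_eq0; intros; apply rsum_eq0; intros. case_basis_eq.
      - apply rsum_eq0; intros; apply rsum_eq0; intros. apply Hz; auto. }
  rewrite (rsum_basis_le_single _ _ cone); [|rewrite cdeg_cone; lia|].
  2:{ intros b1 Hb1. apply rsum_eq0; intros; apply rsum_eq0; intros. apply Hz; auto. }
  rewrite (rsum_basis_le_single _ _ b); [|lia|].
  2:{ intros a2 Ha2. apply rsum_eq0; intros b2 _. destruct (cB_eq_dec b2 cone) as [->|Hb2].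
      - rewrite !ccop_counit_r. case_basis_eq.
      - apply Hz; auto. }
  rewrite (rsum_basis_le_single _ _ cone); [|rewrite cdeg_cone; lia|].
  2:{ intros b2 Hb2. apply Hz; auto. }
  rewrite !ccop_counit_r. case_basis_eq.
Qed.

Lemma coprod2_sum_defect_r a b D E :
  (forall x y, (cdeg x + cdeg y < cdeg a + cdeg b)%nat -> D x y = 0) ->
  coprod2_sum a b (fun a1 b1 a2 b2 => E a1 a2 * D b1 b2) = E cone cone * D a b.
Proof.
  intros HD. unfold coprod2_sum. cbv zeta.
  assert (Hz : forall a1 b1 a2 b2, a1 <> cone \/ a2 <> cone ->
            INR (ccop a1 b1 a) * INR (ccop a2 b2 b) * (E a1 a2 * D b1 b2) = 0).
  { intros a1 b1 a2 b2 Ha.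
    destruct (Nat.eq_dec (cdeg a1 + cdeg b1) (cdeg a)) as [E1|E1];
      [|rewrite (ccop_INR_eq0 a1 b1 a E1); ring].
    destruct (Nat.eq_dec (cdeg a2 + cdeg b2) (cdeg b)) as [E2|E2];
      [|rewrite (ccop_INR_eq0 a2 b2 b E2); ring].
    rewrite HD; [ring|]. destruct Ha as [Ha|Ha]; apply cdeg_ge1 in Ha; lia. }
  rewrite (rsum_basis_le_single _ _ cone); [|rewrite cdeg_cone; lia|].
  2:{ intros a1 Ha1. apply rsum_eq0; intros; apply rsum_eq0; intros; apply rsum_eq0; intros.
      apply Hz; auto. }
  rewrite (rsum_basis_le_single _ _ a); [|lia|].
  2:{ intros b1 Hb1. rewrite ccop_counit_l. apply rsum_eq0; intros; apply rsum_eq0; intros.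
      case_basis_eq. }
  rewrite (rsum_basis_le_single _ _ cone); [|rewrite cdeg_cone; lia|].
  2:{ intros a2 Ha2. apply rsum_eq0; intros. apply Hz; auto. }
  rewrite (rsum_basis_le_single _ _ b); [|lia|].
  2:{ intros b2 Hb2. rewrite !ccop_counit_l. case_basis_eq. }
  rewrite !ccop_counit_l. case_basis_eq.
Qed.

Lemma mul_eval_conv_expand U V a b : mul_eval (conv U V) a b =
  let L := basis_le (cdeg a + cdeg b) in
  rsum L (fun x => rsum L (fun y => U x * V y * rsum L (fun z => INR (cmul a b z) * INR (ccop x y z)))).
Proof.
  set (n := (cdeg a + cdeg b)%nat). set (L := basis_le n). unfold mul_eval. fold n L. cbv zeta.
  transitivity (rsum L (fun z => rsum L (fun x => rsum L (fun y =>
    U x * V y * (INR (cmul a b z) * INR (ccop x y z)))))).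
  - apply rsum_ext; intros z Hz. apply in_basis_le in Hz.
    rewrite (conv_widen n) by exact Hz. rewrite <- rsum_scal_l. apply rsum_ext; intros x _.
    rewrite <- rsum_scal_l. apply rsum_ext; intros y _. ring.
  - rewrite rsum_swap. apply rsum_ext; intros x _. rewrite rsum_swap.
    apply rsum_ext; intros y _. apply rsum_scal_l.
Qed.

Lemma mul_eval_conv U V a b :
  mul_eval (conv U V) a b =
  coprod2_sum a b (fun a1 b1 a2 b2 => mul_eval U a1 a2 * mul_eval V b1 b2).
Proof.
  rewrite mul_eval_conv_expand. set (n := (cdeg a + cdeg b)%nat). set (L := basis_le n). cbv zeta.
  transitivity (rsum L (fun x => rsum L (fun y => rsum L (fun a1 => rsum L (fun b1 =>
    rsum L (fun a2 => rsum L (fun b2 => INR (ccop a1 b1 a) * INR (ccop a2 b2 b) *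
      (INR (cmul a1 a2 x) * U x * (INR (cmul b1 b2 y) * V y))))))))).
  { apply rsum_ext; intros x _. apply rsum_ext; intros y _.
    unfold L. rewrite cbialg_basis_le by lia. fold L.
    rewrite <- rsum_scal_l. apply rsum_ext; intros a1 _. rewrite <- rsum_scal_l.
    apply rsum_ext; intros b1 _. rewrite <- rsum_scal_l. apply rsum_ext; intros a2 _.
    rewrite <- rsum_scal_l. apply rsum_ext; intros b2 _. ring. }
  rewrite rsum_swap2. apply rsum_ext; intros a1 _.
  rewrite rsum_swap2. apply rsum_ext; intros b1 _.
  rewrite rsum_swap2. apply rsum_ext; intros a2 _.
  rewrite rsum_swap2. apply rsum_ext; intros b2 _.
  destruct (Nat.eq_dec (cdeg a1 + cdeg b1) (cdeg a)) as [E1|E1];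
    [|rewrite (ccop_INR_eq0 _ _ _ E1); rewrite rsum_eq0; [ring|];
      intros; apply rsum_eq0; intros; ring].
  destruct (Nat.eq_dec (cdeg a2 + cdeg b2) (cdeg b)) as [E2|E2];
    [|rewrite (ccop_INR_eq0 _ _ _ E2); rewrite rsum_eq0; [ring|];
      intros; apply rsum_eq0; intros; ring].
  unfold L. rewrite <- (mul_eval_widen n U), <- (mul_eval_widen n V) by (unfold n; lia).
  rewrite <- rsum_prod, <- rsum_scal_l. apply rsum_ext; intros x _.
  rewrite <- rsum_scal_l. apply rsum_ext; intros y _. ring.
Qed.

Lemma mul_eval_cenum U x y :
  mul_eval U x y = rsum (cenum (cdeg x + cdeg y)) (fun z => INR (cmul x y z) * U z).
Proof.
  apply rsum_basis_le_graded; [lia|]. intros z Hz. rewrite cmul_INR_eq0 by exact Hz. ring.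
Qed.

Lemma mul_defect_cone_l U y : U cone = 1 -> mul_defect U cone y = 0.
Proof. intros HU. unfold mul_defect. rewrite mul_eval_cone_l, HU. ring. Qed.

Lemma mul_defect_cone_r U x : U cone = 1 -> mul_defect U x cone = 0.
Proof. intros HU. unfold mul_defect. rewrite mul_eval_cone_r, HU. ring. Qed.

(* Expanding [<U * V, a b>] with [Delta (a b) = Delta a Delta b], the defects of [U] and [V]
   can only survive on the terms [a (x) 1, b (x) 1] and [1 (x) a, 1 (x) b]. *)
Lemma mul_defect_conv U V W a b : U cone = 1 -> V cone = 1 ->
  (forall z, (cdeg z <= cdeg a + cdeg b)%nat -> W z = conv U V z) ->
  (forall x y, (cdeg x + cdeg y < cdeg a + cdeg b)%nat -> mul_defect U x y = 0) ->
  (forall x y, (cdeg x + cdeg y < cdeg a + cdeg b)%nat -> mul_defect V x y = 0) ->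
  mul_defect W a b = mul_defect U a b + mul_defect V a b.
Proof.
  intros HU HV HW DU DV. unfold mul_defect at 1.
  rewrite (mul_eval_ext W (conv U V)) by (intros z Hz; apply HW; lia).
  rewrite mul_eval_conv, !HW by lia.
  rewrite (coprod2_sum_ext a b _ (fun a1 b1 a2 b2 =>
      U a1 * V b1 * (U a2 * V b2) + mul_defect U a1 a2 * (V b1 * V b2)
    + (U a1 * U a2 * mul_defect V b1 b2 + mul_defect U a1 a2 * mul_defect V b1 b2)))
    by (intros; unfold mul_defect; ring).
  rewrite !coprod2_sum_plus, coprod2_sum_tensor, coprod2_sum_defect_l, coprod2_sum_defect_r,
    (coprod2_sum_defect_l a b (mul_defect U)) by assumption.
  rewrite mul_defect_cone_l, HU, HV by exact HV. ring.
Qed.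

Lemma mul_eval_abs_le U w P a b :
  (forall z, cdeg z = (cdeg a + cdeg b)%nat -> Rabs (U z) <= w z * P) ->
  Rabs (mul_eval U a b) <= mul_eval w a b * P.
Proof.
  intros HU. unfold mul_eval. rewrite <- rsum_scal_r.
  eapply Rle_trans; [apply rsum_abs_le|]. apply rsum_le; intros z _.
  destruct (Nat.eq_dec (cdeg z) (cdeg a + cdeg b)) as [E|E].
  - rewrite Rabs_mult, Rabs_right, Rmult_assoc by (apply Rle_ge, pos_INR).
    apply Rmult_le_compat_l; [apply pos_INR|]. now apply HU.
  - rewrite cmul_INR_eq0 by exact E. rewrite !Rmult_0_l, Rabs_R0. lra.
Qed.
End GradedBasis.

(** * The sewing lemma *)

Lemma powR_nonneg x a : 0 <= powR x a.
Proof.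
  unfold powR. destruct (Req_EM_T x 0); [destruct (Req_EM_T a 0); lra|].
  left; apply exp_pos.
Qed.

Lemma powR_Rpower x a : x <> 0 -> powR x a = Rpower x a.
Proof. intros Hx. unfold powR. now destruct (Req_EM_T x 0). Qed.

Lemma powR_0_l a : a <> 0 -> powR 0 a = 0.
Proof. intros Ha. unfold powR. destruct (Req_EM_T 0 0); [|lra]. now destruct (Req_EM_T a 0). Qed.

Lemma powR_0_r x : powR x 0 = 1.
Proof.
  unfold powR. destruct (Req_EM_T x 0), (Req_EM_T 0 0); try lra.
  unfold Rpower. rewrite Rmult_0_l. apply exp_0.
Qed.

Lemma powR_mult x y a : 0 <= x -> 0 <= y -> 0 < a -> powR (x * y) a = powR x a * powR y a.
Proof.
  intros Hx Hy Ha.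
  destruct (Req_dec x 0) as [->|Hx0]; [rewrite Rmult_0_l, powR_0_l; lra|].
  destruct (Req_dec y 0) as [->|Hy0]; [rewrite Rmult_0_r, powR_0_l; lra|].
  rewrite !powR_Rpower by (try apply Rmult_integral_contrapositive; auto).
  symmetry; apply Rpower_mult_distr; lra.
Qed.

Lemma powR_le_compat x y a : 0 <= x <= y -> 0 < a -> powR x a <= powR y a.
Proof.
  intros Hxy Ha. destruct (Req_dec x 0) as [->|Hx0].
  - rewrite powR_0_l by lra. apply powR_nonneg.
  - rewrite !powR_Rpower by lra. apply Rle_Rpower_l; lra.
Qed.

Lemma powR_plus x a b : 0 <= x -> 0 < a -> 0 < b -> powR x (a + b) = powR x a * powR x b.
Proof.
  intros Hx Ha Hb. destruct (Req_dec x 0) as [->|Hx0]; [rewrite !powR_0_l; lra|].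
  rewrite !powR_Rpower by lra. apply Rpower_plus.
Qed.

Lemma powR_div2 x a : 0 <= x -> 0 < a -> powR (x / 2) a = powR x a / Rpower 2 a.
Proof.
  intros Hx Ha. unfold Rdiv. rewrite powR_mult, (powR_Rpower (/ 2)) by lra. f_equal.
  unfold Rpower. rewrite ln_Rinv, <- Ropp_mult_distr_r, exp_Ropp by lra. reflexivity.
Qed.

Lemma Rpower2_gt2 a : 1 < a -> 2 < Rpower 2 a.
Proof. intros Ha. rewrite <- (Rpower_1 2) at 1 by lra. apply Rpower_lt; lra. Qed.

Lemma le_of_le_geometric x y c r : 0 <= c -> 0 <= r < 1 ->
  (forall j, x <= y + r ^ j * c) -> x <= y.
Proof.
  intros Hc Hr Hj. destruct (Rle_dec x y) as [|Hxy]; [assumption|exfalso].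
  destruct (pow_lt_1_zero r ltac:(rewrite Rabs_right; lra) ((x - y) / (c + 1)))
    as [N HN]; [apply Rdiv_lt_0_compat; lra|].
  specialize (HN N (le_n N)). rewrite Rabs_right in HN by (apply Rle_ge, pow_le; lra).
  apply (Rmult_lt_compat_r (c + 1)) in HN; [|lra].
  unfold Rdiv in HN. rewrite Rmult_assoc, Rinv_l, Rmult_1_r in HN by lra.
  specialize (Hj N). assert (0 <= r ^ N) by (apply pow_le; lra). nra.
Qed.

Lemma midpoint_dist s t :
  Rabs ((s + t) / 2 - s) = Rabs (t - s) / 2 /\ Rabs (t - (s + t) / 2) = Rabs (t - s) / 2.
Proof.
  replace ((s + t) / 2 - s) with ((t - s) / 2) by field.
  replace (t - (s + t) / 2) with ((t - s) / 2) by field.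
  unfold Rdiv. rewrite Rabs_mult, (Rabs_right (/ 2)) by lra. auto.
Qed.

Section Halving.
Variable th : R.
Hypothesis th_gt1 : 1 < th.
Variable Phi : R -> R -> R.
Variable A : R.
Hypothesis A_nonneg : 0 <= A.
Hypothesis Phi_midpoint : forall s t,
  Rabs (Phi s t) <= Rabs (Phi s ((s + t) / 2)) + Rabs (Phi ((s + t) / 2) t)
                    + A * powR (Rabs (t - s) / 2) th.

(* Splitting at the midpoint turns a bound [K |t - s|^th] into [(2 K + A) / 2^th |t - s|^th],
   a contraction whose fixed point is [L]. *)
Let L := A / (Rpower 2 th - 2).

Lemma halving_step K s t :
  Rabs (Phi s ((s + t) / 2)) <= K * powR (Rabs (t - s) / 2) th ->
  Rabs (Phi ((s + t) / 2) t) <= K * powR (Rabs (t - s) / 2) th ->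
  Rabs (Phi s t) <= (2 * K + A) / Rpower 2 th * powR (Rabs (t - s)) th.
Proof.
  intros H1 H2. pose proof (Phi_midpoint s t).
  rewrite powR_div2 in * by (try apply Rabs_pos; lra).
  replace ((2 * K + A) / Rpower 2 th * powR (Rabs (t - s)) th) with
    (K * (powR (Rabs (t - s)) th / Rpower 2 th) + K * (powR (Rabs (t - s)) th / Rpower 2 th)
     + A * (powR (Rabs (t - s)) th / Rpower 2 th)) by (field; pose proof (Rpower2_gt2 th th_gt1); lra).
  lra.
Qed.

Lemma halving_global K :
  (forall s t, Rabs (t - s) <= 1 -> Rabs (Phi s t) <= K * powR (Rabs (t - s)) th) ->
  forall s t, Rabs (Phi s t) <= Rmax K L * powR (Rabs (t - s)) th.
Proof.
  intros Hloc. set (Ks := Rmax K L). pose proof (Rpower2_gt2 th th_gt1) as HP.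
  assert (HKs : (2 * Ks + A) / Rpower 2 th <= Ks).
  { assert (L <= Ks) by apply Rmax_r.
    assert (A <= (Rpower 2 th - 2) * Ks).
    { unfold L in *. apply (Rmult_le_compat_l (Rpower 2 th - 2)) in H; [|lra].
      unfold Rdiv in H. rewrite <- Rmult_assoc, (Rmult_comm _ A), Rmult_assoc, Rinv_r, Rmult_1_r in H
        by lra. exact H. }
    apply (Rmult_le_reg_r (Rpower 2 th)); [lra|]. unfold Rdiv.
    rewrite Rmult_assoc, Rinv_l, Rmult_1_r by lra. lra. }
  assert (Hj : forall j s t, Rabs (t - s) <= 2 ^ j ->
             Rabs (Phi s t) <= Ks * powR (Rabs (t - s)) th).
  { induction j as [|j IH]; intros s t Hst.
    - eapply Rle_trans; [apply Hloc; simpl in Hst; lra|].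
      apply Rmult_le_compat_r; [apply powR_nonneg|apply Rmax_l].
    - destruct (midpoint_dist s t) as [E1 E2].
      simpl in Hst. eapply Rle_trans;
        [apply (halving_step Ks); [rewrite <- E1; apply IH; rewrite E1; lra
                                  |rewrite <- E2; apply IH; rewrite E2; lra]|].
      apply Rmult_le_compat_r; [apply powR_nonneg|exact HKs]. }
  intros s t. destruct (Pow_x_infinity 2 ltac:(rewrite Rabs_right; lra) (Rabs (t - s)))
    as [j Hj']. apply (Hj j). specialize (Hj' j (le_n j)).
  rewrite Rabs_right in Hj' by (apply Rle_ge, pow_le; lra). lra.
Qed.

Lemma halving_sharp K :
  (forall s t, Rabs (Phi s t) <= K * powR (Rabs (t - s)) th) ->
  forall s t, Rabs (Phi s t) <= L * powR (Rabs (t - s)) th.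
Proof.
  intros Hglob. pose proof (Rpower2_gt2 th th_gt1) as HP.
  set (r := 2 / Rpower 2 th).
  assert (Hr : 0 <= r < 1).
  { unfold r. split; [left; apply Rdiv_lt_0_compat; lra|].
    apply (Rmult_lt_reg_r (Rpower 2 th)); [lra|]. unfold Rdiv.
    rewrite Rmult_assoc, Rinv_l by lra. lra. }
  assert (HL : 0 <= L) by (unfold L; apply Rmult_le_pos; [lra|left; apply Rinv_0_lt_compat; lra]).
  assert (Hj : forall j s t, Rabs (Phi s t) <= (L + r ^ j * (Rabs K + L)) * powR (Rabs (t - s)) th).
  { induction j as [|j IH]; intros s t.
    - eapply Rle_trans; [apply Hglob|]. apply Rmult_le_compat_r; [apply powR_nonneg|].
      pose proof (Rle_abs K). simpl; lra.
    - destruct (midpoint_dist s t) as [E1 E2].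
      eapply Rle_trans; [apply (halving_step (L + r ^ j * (Rabs K + L)));
                         [rewrite <- E1; apply IH|rewrite <- E2; apply IH]|].
      right. f_equal. unfold r, L. simpl. field. lra. }
  intros s t. apply (le_of_le_geometric _ _ ((Rabs K + L) * powR (Rabs (t - s)) th) r).
  - apply Rmult_le_pos; [pose proof (Rabs_pos K); lra|apply powR_nonneg].
  - exact Hr.
  - intros j. specialize (Hj j s t). lra.
Qed.

Lemma halving_bound K :
  (forall s t, Rabs (t - s) <= 1 -> Rabs (Phi s t) <= K * powR (Rabs (t - s)) th) ->
  forall s t, Rabs (Phi s t) <= L * powR (Rabs (t - s)) th.
Proof. intros Hloc. apply (halving_sharp (Rmax K L)), halving_global, Hloc. Qed.

End Halving.

Lemma additive_eq0 th D K : 1 < th ->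
  (forall s u t, D s t = D s u + D u t) ->
  (forall s t, Rabs (D s t) <= K * powR (Rabs (t - s)) th) ->
  forall s t, D s t = 0.
Proof.
  intros Hth Hadd Hb s t.
  assert (Hmid : forall s t, Rabs (D s t) <= Rabs (D s ((s + t) / 2)) + Rabs (D ((s + t) / 2) t)
                                + 0 * powR (Rabs (t - s) / 2) th).
  { intros s' t'. rewrite (Hadd s' ((s' + t') / 2) t'), Rmult_0_l, Rplus_0_r. apply Rabs_triang. }
  pose proof (halving_bound th Hth D 0 ltac:(lra) Hmid K ltac:(intros; apply Hb) s t) as H0.
  unfold Rdiv in H0. rewrite Rmult_0_l, Rmult_0_l in H0.
  destruct (Req_dec (D s t) 0) as [|Hne]; [assumption|].
  pose proof (Rabs_pos_lt _ Hne). lra.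
Qed.

Lemma Un_cv_dist_le u l c B : Un_cv u l -> (forall i, Rabs (u i - c) <= B) -> Rabs (l - c) <= B.
Proof.
  intros Hu Hb. assert (Hc : Un_cv (fun _ => B) B).
  { intros eps Heps. exists 0%nat. intros. unfold R_dist. rewrite Rminus_diag, Rabs_R0. lra. }
  assert (Hc' : Un_cv (fun _ => c) c).
  { intros eps Heps. exists 0%nat. intros. unfold R_dist. rewrite Rminus_diag, Rabs_R0. lra. }
  apply (@Rle_cv_lim (fun i => Rabs (u i - c)) (fun _ => B)); [exact Hb| |exact Hc].
  apply cv_cvabs, CV_minus; assumption.
Qed.

Section GeometricIncrements.
Variables (u : nat -> R) (A r : R).
Hypotheses (A_nonneg : 0 <= A) (r_range : 0 <= r < 1).
Hypothesis u_incr : forall i, Rabs (u (S i) - u i) <= A * r ^ i.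

Lemma geometric_tail i : Rabs (u i - u 0%nat) <= A / (1 - r).
Proof.
  assert (Hi : forall i, Rabs (u i - u 0%nat) <= A * (1 - r ^ i) / (1 - r)).
  { induction i0 as [|i0 IH].
    - rewrite Rminus_diag, Rabs_R0. simpl. right; field; lra.
    - replace (u (S i0) - u 0%nat) with ((u (S i0) - u i0) + (u i0 - u 0%nat)) by ring.
      eapply Rle_trans; [apply Rabs_triang|]. pose proof (u_incr i0).
      replace (A * (1 - r ^ S i0) / (1 - r)) with (A * r ^ i0 + A * (1 - r ^ i0) / (1 - r))
        by (simpl; field; lra).
      lra. }
  eapply Rle_trans; [apply Hi|]. unfold Rdiv. apply Rmult_le_compat_r.
  - left; apply Rinv_0_lt_compat; lra.
  - assert (0 <= r ^ i) by (apply pow_le; lra). nra.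
Qed.

End GeometricIncrements.

Lemma geometric_cauchy u A r : 0 <= A -> 0 <= r < 1 ->
  (forall i, Rabs (u (S i) - u i) <= A * r ^ i) -> Cauchy_crit u.
Proof.
  intros HA Hr Hu eps Heps.
  destruct (pow_lt_1_zero r ltac:(rewrite Rabs_right; lra) (eps * (1 - r) / (A + 1)))
    as [N HN]; [apply Rdiv_lt_0_compat; [apply Rmult_lt_0_compat|]; lra|].
  assert (Htail : forall n j, (n >= N)%nat -> Rabs (u (n + j)%nat - u n) < eps).
  { intros n j Hn.
    assert (Hv := geometric_tail (fun i => u (n + i)%nat) (A * r ^ n) r
      ltac:(apply Rmult_le_pos; [lra|apply pow_le; lra]) Hr
      ltac:(intros i; cbv beta; rewrite Nat.add_succ_r, Rmult_assoc, <- pow_add; apply Hu) j).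
    simpl in Hv. rewrite Nat.add_0_r in Hv. eapply Rle_lt_trans; [exact Hv|].
    specialize (HN n Hn). rewrite Rabs_right in HN by (apply Rle_ge, pow_le; lra).
    apply (Rmult_lt_reg_r (1 - r)); [lra|]. unfold Rdiv in *.
    rewrite Rmult_assoc, Rinv_l, Rmult_1_r by lra.
    apply (Rmult_lt_compat_l (A + 1)) in HN; [|lra].
    replace ((A + 1) * (eps * (1 - r) * / (A + 1))) with (eps * (1 - r)) in HN by (field; lra).
    assert (0 <= r ^ n) by (apply pow_le; lra). nra. }
  exists N. intros n m Hn Hm. unfold R_dist.
  destruct (le_lt_dec n m) as [Hnm|Hnm].
  - replace m with (n + (m - n))%nat by lia. rewrite Rabs_minus_sym. now apply Htail.
  - replace n with (m + (n - m))%nat by lia. now apply Htail.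
Qed.

Definition dyadic (k : nat) : R := / 2 ^ k.
Definition grid (k : nat) (m : Z) : R := IZR m * dyadic k.
Definition grid_index (k : nat) (t : R) : Z := Int_part (t * 2 ^ k).

Lemma pow2_pos k : 0 < 2 ^ k.
Proof. apply pow_lt; lra. Qed.

Lemma dyadic_pos k : 0 < dyadic k.
Proof. apply Rinv_0_lt_compat, pow2_pos. Qed.

Lemma dyadic_S k : dyadic (S k) = dyadic k / 2.
Proof. unfold dyadic. simpl. field. apply pow_nonzero; lra. Qed.

Lemma grid_double k m : grid (S k) (2 * m) = grid k m.
Proof. unfold grid. rewrite dyadic_S, mult_IZR. field. Qed.

Lemma grid_succ k m : grid k (m + 1) = grid k m + dyadic k.
Proof. unfold grid. rewrite plus_IZR. ring. Qed.

Lemma grid_index_bounds k t :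
  IZR (grid_index k t) <= t * 2 ^ k < IZR (grid_index k t) + 1.
Proof. unfold grid_index. destruct (base_Int_part (t * 2 ^ k)). lra. Qed.

Lemma grid_index_spec k t :
  grid k (grid_index k t) <= t < grid k (grid_index k t) + dyadic k.
Proof.
  pose proof (grid_index_bounds k t). pose proof (pow2_pos k). unfold grid, dyadic.
  set (m := IZR (grid_index k t)) in *.
  replace (m * / 2 ^ k) with (m / 2 ^ k) by reflexivity.
  split.
  - apply (Rmult_le_reg_r (2 ^ k)); [lra|]. unfold Rdiv. rewrite Rmult_assoc, Rinv_l; lra.
  - apply (Rmult_lt_reg_r (2 ^ k)); [lra|]. unfold Rdiv.
    rewrite Rmult_plus_distr_r, !Rmult_assoc, Rinv_l; lra.
Qed.

Lemma grid_index_S k t :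
  grid_index (S k) t = (2 * grid_index k t)%Z \/ grid_index (S k) t = (2 * grid_index k t + 1)%Z.
Proof.
  pose proof (grid_index_bounds k t) as Hb. set (m := grid_index k t) in *.
  unfold grid_index. replace (t * 2 ^ S k) with (2 * (t * 2 ^ k)) by (simpl; ring).
  destruct (Rlt_dec (2 * (t * 2 ^ k)) (IZR (2 * m + 1))) as [Hl|Hl]; [left|right];
    symmetry; apply Int_part_spec; rewrite ?plus_IZR, ?mult_IZR in *; simpl in *; lra.
Qed.

Lemma grid_index_le k s t : s <= t ->
  (grid_index k s <= grid_index k t)%Z /\
  IZR (grid_index k t - grid_index k s) < (t - s) * 2 ^ k + 1.
Proof.
  intros Hst. pose proof (grid_index_bounds k s). pose proof (grid_index_bounds k t).
  pose proof (pow2_pos k).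
  assert (s * 2 ^ k <= t * 2 ^ k) by (apply Rmult_le_compat_r; lra).
  split.
  - assert (IZR (grid_index k s) < IZR (grid_index k t + 1)) by (rewrite plus_IZR; lra).
    apply lt_IZR in H3. lia.
  - rewrite minus_IZR. lra.
Qed.

Lemma grid_index_abs k t : Rabs (IZR (grid_index k t)) <= Rabs t * 2 ^ k + 1.
Proof.
  pose proof (grid_index_bounds k t). pose proof (pow2_pos k).
  rewrite <- (Rabs_right (2 ^ k)) by lra. rewrite <- Rabs_mult.
  unfold Rabs. repeat destruct Rcase_abs; lra.
Qed.

Lemma dyadic_bracket x : 0 < x <= 1 -> exists k, dyadic (S k) < x <= dyadic k.
Proof.
  intros Hx.
  destruct (pow_lt_1_zero (/ 2) ltac:(rewrite Rabs_right; lra) x ltac:(lra)) as [N HN].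
  specialize (HN N (le_n N)). rewrite Rabs_right, pow_inv in HN by (apply Rle_ge, pow_le; lra).
  fold (dyadic N) in HN. clear - Hx HN. induction N as [|N IH].
  - unfold dyadic in HN. simpl in HN. lra.
  - destruct (Rlt_dec (dyadic N) x) as [Hl|Hl]; [apply IH, Hl|]. exists N. lra.
Qed.

Definition zprim (w : Z -> R) (m : Z) : R :=
  if Z_le_dec 0 m then rsum (seq 0 (Z.to_nat m)) (fun i => w (Z.of_nat i))
  else - rsum (seq 0 (Z.to_nat (- m))) (fun i => w (- Z.of_nat i - 1)%Z).

Lemma zprim_0 w : zprim w 0 = 0.
Proof. reflexivity. Qed.

Lemma zprim_succ w m : zprim w (m + 1) = zprim w m + w m.
Proof.
  unfold zprim. destruct (Z_le_dec 0 (m + 1)), (Z_le_dec 0 m); try lia.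
  - replace (Z.to_nat (m + 1)) with (S (Z.to_nat m)) by lia.
    rewrite seq_S, rsum_app. simpl. rewrite Z2Nat.id by lia. ring.
  - replace m with (-1)%Z by lia. simpl. ring.
  - replace (Z.to_nat (- m)) with (S (Z.to_nat (- (m + 1)))) by lia.
    rewrite seq_S, rsum_app. simpl.
    replace (- Z.of_nat (Z.to_nat (- (m + 1))) - 1)%Z with m by lia. ring.
Qed.

Section GermSewing.
Variables (g : R -> R -> R) (M th : R).
Hypotheses (th_gt1 : 1 < th) (M_nonneg : 0 <= M).
Hypothesis g_delta : forall a c t, a <= c <= t ->
  Rabs (g a t - g a c - g c t) <= M * powR (t - a) th.

Let q := / Rpower 2 th.
Let r := 2 * q.

Lemma q_range : 0 < q /\ r < 1.
Proof.
  pose proof (Rpower2_gt2 th th_gt1). unfold r, q. split; [apply Rinv_0_lt_compat; lra|].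
  apply (Rmult_lt_reg_r (Rpower 2 th)); [lra|]. rewrite Rmult_assoc, Rinv_l; lra.
Qed.

Lemma powR_dyadic k : powR (dyadic k) th = q ^ k.
Proof.
  induction k as [|k IH].
  - unfold dyadic. simpl. rewrite Rinv_1, powR_Rpower by lra.
    unfold Rpower. rewrite ln_1, Rmult_0_r. apply exp_0.
  - rewrite dyadic_S, powR_div2, IH by (pose proof (dyadic_pos k); lra). simpl. unfold q. field.
    pose proof (Rpower2_gt2 th th_gt1). lra.
Qed.

Lemma g_delta_dyadic k a c t : a <= c <= t -> t - a <= dyadic k ->
  Rabs (g a t - g a c - g c t) <= M * q ^ k.
Proof.
  intros Hact Hk. eapply Rle_trans; [apply g_delta, Hact|]. rewrite <- powR_dyadic.
  apply Rmult_le_compat_l; [exact M_nonneg|]. apply powR_le_compat; lra.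
Qed.

Definition level (k : nat) : Z -> R := zprim (fun i => g (grid k i) (grid k (i + 1))).

(* Riemann-type sum of [g] along the level-[k] dyadic grid, from the origin up to [t]. *)
Definition approx (k : nat) (t : R) : R :=
  level k (grid_index k t) + g (grid k (grid_index k t)) t.

Definition level_gap (k : nat) (m : Z) : R := level (S k) (2 * m) - level k m.

Lemma level_gap_succ k m : Rabs (level_gap k (m + 1) - level_gap k m) <= M * q ^ k.
Proof.
  unfold level_gap, level. replace (2 * (m + 1))%Z with ((2 * m + 1) + 1)%Z by lia.
  rewrite !zprim_succ. replace (2 * m + 1 + 1)%Z with (2 * (m + 1))%Z by lia.
  rewrite !grid_double.
  set (a := grid k m). set (c := grid (S k) (2 * m + 1)).
  assert (Hc : c = a + dyadic k / 2) by (unfold c, a; rewrite grid_succ, grid_double, dyadic_S; ring).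
  rewrite grid_succ. fold a. pose proof (dyadic_pos k).
  replace (_ - _) with (- (g a (a + dyadic k) - g a c - g c (a + dyadic k))) by ring.
  rewrite Rabs_Ropp. apply g_delta_dyadic; lra.
Qed.

Lemma level_gap_le k m1 m2 : (m1 <= m2)%Z ->
  Rabs (level_gap k m2 - level_gap k m1) <= IZR (m2 - m1) * (M * q ^ k).
Proof.
  intros Hm. replace m2 with (m1 + Z.of_nat (Z.to_nat (m2 - m1)))%Z at 1 by lia.
  replace (IZR (m2 - m1)) with (INR (Z.to_nat (m2 - m1)))
    by (rewrite INR_IZR_INZ; f_equal; lia).
  induction (Z.to_nat (m2 - m1)) as [|j IH].
  - rewrite Z.add_0_r, Rminus_diag, Rabs_R0. simpl. lra.
  - rewrite Nat2Z.inj_succ, <- Z.add_1_r, Z.add_assoc, S_INR.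
    replace (level_gap k (m1 + Z.of_nat j + 1) - level_gap k m1) with
      ((level_gap k (m1 + Z.of_nat j + 1) - level_gap k (m1 + Z.of_nat j))
       + (level_gap k (m1 + Z.of_nat j) - level_gap k m1)) by ring.
    eapply Rle_trans; [apply Rabs_triang|]. pose proof (level_gap_succ k (m1 + Z.of_nat j)).
    lra.
Qed.

Lemma level_gap_abs k m : Rabs (level_gap k m) <= Rabs (IZR m) * (M * q ^ k).
Proof.
  assert (H0 : level_gap k 0 = 0) by (unfold level_gap, level; rewrite Z.mul_0_r, !zprim_0; ring).
  destruct (Z_le_dec 0 m) as [Hm|Hm].
  - rewrite <- (Rminus_0_r (level_gap k m)), <- H0, (Rabs_right (IZR m)) by (apply Rle_ge, IZR_le; lia).
    replace (IZR m) with (IZR (m - 0)) by (f_equal; lia). now apply level_gap_le.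
  - replace (level_gap k m) with (- (level_gap k 0 - level_gap k m)) by (rewrite H0; ring).
    rewrite Rabs_Ropp, (Rabs_left (IZR m)) by (apply IZR_lt; lia).
    replace (- IZR m) with (IZR (0 - m)) by (rewrite minus_IZR; simpl; ring).
    apply level_gap_le; lia.
Qed.

Lemma approx_succ k t : exists rho,
  approx (S k) t - approx k t = level_gap k (grid_index k t) + rho /\ Rabs rho <= M * q ^ k.
Proof.
  pose proof (grid_index_spec k t) as Hk. pose proof (grid_index_spec (S k) t) as HSk.
  pose proof (q_range) as [Hq _].
  unfold approx, level_gap.
  destruct (grid_index_S k t) as [E|E]; rewrite E in *; set (m := grid_index k t) in *.
  - exists 0. rewrite grid_double, Rabs_R0. split; [ring|].
    apply Rmult_le_pos; [lra|apply pow_le; lra].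
  - set (a := grid k m) in *. set (c := grid (S k) (2 * m + 1)) in *.
    assert (Hc : c = a + dyadic k / 2) by (unfold c, a; rewrite grid_succ, grid_double, dyadic_S; ring).
    exists (- (g a t - g a c - g c t)). split.
    + unfold level at 1. rewrite zprim_succ. fold (level (S k)). rewrite grid_double. fold a c. ring.
    + rewrite Rabs_Ropp. rewrite dyadic_S in HSk. apply g_delta_dyadic; lra.
Qed.

Lemma approx_succ_bound k t :
  Rabs (approx (S k) t - approx k t) <= M * (Rabs t + 2) * r ^ k.
Proof.
  destruct (approx_succ k t) as [rho [-> Hrho]]. pose proof (q_range) as [Hq Hr].
  eapply Rle_trans; [apply Rabs_triang|].
  pose proof (level_gap_abs k (grid_index k t)). pose proof (grid_index_abs k t).
  assert (Hqk : 0 <= M * q ^ k) by (apply Rmult_le_pos; [lra|apply pow_le; lra]).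
  assert (Hrk : r ^ k = 2 ^ k * q ^ k) by (unfold r; apply Rpow_mult_distr).
  assert (Hqr : q ^ k <= r ^ k).
  { rewrite Hrk. assert (1 <= 2 ^ k) by (apply pow_R1_Rle; lra). assert (0 <= q ^ k) by (apply pow_le; lra). nra. }
  assert (Rabs (IZR (grid_index k t)) * (M * q ^ k) <= (Rabs t * 2 ^ k + 1) * (M * q ^ k))
    by (apply Rmult_le_compat_r; assumption).
  pose proof (Rabs_pos t). rewrite Hrk in *. nra.
Qed.

Lemma approx_cauchy t : Cauchy_crit (fun k => approx k t).
Proof.
  pose proof (q_range) as [Hq Hr].
  apply (geometric_cauchy _ (M * (Rabs t + 2)) r).
  - pose proof (Rabs_pos t). apply Rmult_le_pos; lra.
  - unfold r in *; lra.
  - intros k. apply approx_succ_bound.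
Qed.

Lemma approx_succ_diff k s t : s <= t ->
  Rabs ((approx (S k) t - approx k t) - (approx (S k) s - approx k s))
  <= M * q ^ k * ((t - s) * 2 ^ k + 3).
Proof.
  intros Hst. destruct (approx_succ k t) as [r1 [-> H1]].
  destruct (approx_succ k s) as [r2 [-> H2]]. destruct (grid_index_le k s t Hst) as [Hle Hd].
  replace (_ - _) with ((level_gap k (grid_index k t) - level_gap k (grid_index k s)) + (r1 - r2))
    by ring.
  eapply Rle_trans; [apply Rabs_triang|]. pose proof (level_gap_le k _ _ Hle).
  assert (Rabs (r1 - r2) <= 2 * (M * q ^ k)).
  { unfold Rminus. eapply Rle_trans; [apply Rabs_triang|]. rewrite Rabs_Ropp. lra. }
  assert (0 <= M * q ^ k) by (apply Rmult_le_pos; [lra|apply pow_le; pose proof q_range; lra]).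
  assert (IZR (grid_index k t - grid_index k s) * (M * q ^ k) <= ((t - s) * 2 ^ k + 1) * (M * q ^ k))
    by (apply Rmult_le_compat_r; lra).
  nra.
Qed.

Lemma approx_local k s t : s <= t <= s + dyadic k ->
  Rabs (approx k t - approx k s - g s t) <= 2 * M * Rpower 2 th * q ^ k.
Proof.
  intros Hst. destruct (grid_index_le k s t ltac:(lra)) as [Hle Hd].
  pose proof (grid_index_spec k s) as Hs. pose proof (grid_index_spec k t) as Ht.
  pose proof (pow2_pos k).
  assert (Hd2 : (t - s) * 2 ^ k <= 1).
  { assert (Hts : t - s <= dyadic k) by lra. apply (Rmult_le_compat_r (2 ^ k)) in Hts; [|lra].
    unfold dyadic in Hts. rewrite Rinv_l in Hts by lra. exact Hts. }
  assert (Hc : grid_index k t = grid_index k s \/ grid_index k t = (grid_index k s + 1)%Z).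
  { assert (IZR (grid_index k t - grid_index k s) < 2) by lra. apply lt_IZR in H0. lia. }
  assert (H2k : M * powR (2 * dyadic k) th = M * Rpower 2 th * q ^ k).
  { rewrite powR_mult, powR_Rpower, powR_dyadic by (pose proof (dyadic_pos k); lra). ring. }
  assert (Hb : forall a c, a <= c <= t -> t - a <= 2 * dyadic k ->
             Rabs (g a t - g a c - g c t) <= M * Rpower 2 th * q ^ k).
  { intros a c Hac Ha. rewrite <- H2k. eapply Rle_trans; [apply g_delta, Hac|].
    apply Rmult_le_compat_l; [exact M_nonneg|]. apply powR_le_compat; lra. }
  assert (0 <= M * Rpower 2 th * q ^ k).
  { pose proof (Rpower2_gt2 th th_gt1). pose proof q_range.
    apply Rmult_le_pos; [apply Rmult_le_pos|apply pow_le]; lra. }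
  unfold approx. set (a := grid k (grid_index k s)) in *.
  destruct Hc as [Hc|Hc]; rewrite Hc in *; fold a in Ht |- *.
  - replace (_ - _) with (g a t - g a s - g s t) by ring.
    eapply Rle_trans; [apply Hb; lra|]. lra.
  - rewrite grid_succ in Ht |- *. fold a in Ht |- *.
    unfold level at 1. rewrite zprim_succ. fold (level k). rewrite grid_succ. fold a.
    replace (_ - _) with (- (g a t - g a (a + dyadic k) - g (a + dyadic k) t)
                          + (g a t - g a s - g s t)) by ring.
    eapply Rle_trans; [apply Rabs_triang|]. rewrite Rabs_Ropp.
    pose proof (Hb a (a + dyadic k) ltac:(lra) ltac:(lra)). pose proof (Hb a s ltac:(lra) ltac:(lra)).
    lra.
Qed.

Definition germ_integral (t : R) : R := proj1_sig (R_complete _ (approx_cauchy t)).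

Let K0 := 2 * M * Rpower 2 th + 4 * M / (1 - r).

Lemma K0_nonneg : 0 <= K0.
Proof.
  pose proof q_range as [Hq Hr]. pose proof (Rpower2_gt2 th th_gt1).
  assert (0 <= 4 * M / (1 - r)) by (apply Rmult_le_pos; [lra|left; apply Rinv_0_lt_compat; lra]).
  assert (0 <= 2 * M * Rpower 2 th) by (apply Rmult_le_pos; lra).
  unfold K0. lra.
Qed.

Lemma germ_integral_dyadic k s t : s <= t <= s + dyadic k ->
  Rabs (germ_integral t - germ_integral s - g s t) <= K0 * q ^ k.
Proof.
  intros Hst. pose proof q_range as [Hq Hr]. pose proof (pow2_pos k).
  assert (Hd : (t - s) * 2 ^ k <= 1).
  { assert (Hts : t - s <= dyadic k) by lra. apply (Rmult_le_compat_r (2 ^ k)) in Hts; [|lra].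
    unfold dyadic in Hts. rewrite Rinv_l in Hts by lra. exact Hts. }
  set (u := fun i => approx (i + k) t - approx (i + k) s).
  assert (Hu : Un_cv u (germ_integral t - germ_integral s)).
  { apply (CV_minus (fun i => approx (i + k) t) (fun i => approx (i + k) s));
      apply (CV_shift' (fun j => approx j _)); unfold germ_integral; apply proj2_sig. }
  assert (Hincr : forall i, Rabs (u (S i) - u i) <= 4 * M * q ^ k * r ^ i).
  { intros i. unfold u. simpl plus.
    replace (_ - _) with ((approx (S (i + k)) t - approx (i + k) t)
                         - (approx (S (i + k)) s - approx (i + k) s)) by ring.
    eapply Rle_trans; [apply approx_succ_diff; lra|].
    rewrite !pow_add. unfold r. rewrite Rpow_mult_distr.
    assert ((t - s) * (2 ^ i * 2 ^ k) <= 2 ^ i) by (pose proof (pow2_pos i); nra).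
    assert (1 <= 2 ^ i) by (apply pow_R1_Rle; lra).
    assert (0 <= M * (q ^ i * q ^ k))
      by (apply Rmult_le_pos; [lra|apply Rmult_le_pos; apply pow_le; lra]).
    nra. }
  assert (Htail := geometric_tail u (4 * M * q ^ k) r
    ltac:(apply Rmult_le_pos; [lra|apply pow_le; lra]) ltac:(unfold r in *; lra) Hincr).
  pose proof (approx_local k s t Hst).
  apply (Un_cv_dist_le u); [exact Hu|]. intros i.
  replace (u i - g s t) with ((u i - u 0%nat) + (approx k t - approx k s - g s t))
    by (unfold u; simpl; ring).
  eapply Rle_trans; [apply Rabs_triang|]. pose proof (Htail i).
  assert (K0 * q ^ k = 2 * M * Rpower 2 th * q ^ k + 4 * M * q ^ k / (1 - r))
    by (unfold K0; field; lra).
  lra.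
Qed.

Lemma germ_sewing_local : exists f K, 0 <= K /\
  forall s t, s <= t <= s + 1 -> Rabs (f t - f s - g s t) <= K * powR (t - s) th.
Proof.
  pose proof q_range as [Hq Hr]. pose proof (Rpower2_gt2 th th_gt1) as HP.
  pose proof K0_nonneg as HK0.
  exists germ_integral, (K0 * Rpower 2 th). split; [apply Rmult_le_pos; lra|]. intros s t Hst.
  destruct (Req_dec s t) as [<-|Hne].
  - pose proof (g_delta s s s ltac:(lra)) as Hss.
    rewrite (Rminus_diag s), powR_0_l, Rmult_0_r in * by lra.
    replace (g s s - g s s - g s s) with (- g s s) in Hss by ring.
    rewrite (Rminus_diag (germ_integral s)), Rminus_0_l. exact Hss.
  - destruct (dyadic_bracket (t - s)) as [k [Hk1 Hk2]]; [lra|].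
    eapply Rle_trans; [apply (germ_integral_dyadic k); lra|].
    rewrite Rmult_assoc. apply Rmult_le_compat_l; [exact HK0|].
    replace (q ^ k) with (Rpower 2 th * q ^ S k) by (simpl; unfold q; field; lra).
    apply Rmult_le_compat_l; [lra|]. rewrite <- powR_dyadic.
    apply powR_le_compat; [pose proof (dyadic_pos (S k)); lra|lra].
Qed.

End GermSewing.

Definition cocycle (C : R -> R -> R -> R) : Prop :=
  forall s u v t, C s v t + C s u v = C s u t + C u v t.

Lemma cocycle_diag C M th : 0 < th -> cocycle C ->
  (forall s u t, Rabs (C s u t) <= M * powR (Rmax (Rabs (u - s)) (Rabs (t - u))) th) ->
  forall s t, C s s t = 0.
Proof.
  intros Hth Hcoc HC s t. assert (E : C s s t = C s s s) by (pose proof (Hcoc s s t s); lra).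
  pose proof (HC s s s) as Hs.
  rewrite (Rminus_diag s), Rabs_R0, Rmax_left, powR_0_l, Rmult_0_r in Hs by lra.
  rewrite E. destruct (Req_dec (C s s s) 0) as [|Hne]; [assumption|].
  pose proof (Rabs_pos_lt _ Hne). lra.
Qed.

Lemma cocycle_coboundary C : cocycle C -> (forall s t, C s s t = 0) ->
  forall s u t, (C s 0 t - C s 0 s) - (C s 0 u - C s 0 s) - (C u 0 t - C u 0 u) = C s u t.
Proof.
  intros Hcoc Cdiag s u t. pose proof (Hcoc s 0 u t). pose proof (Hcoc u 0 u t).
  rewrite Cdiag in *. lra.
Qed.

Theorem sewing C M th : 1 < th -> 0 <= M -> cocycle C ->
  (forall s u t, Rabs (C s u t) <= M * powR (Rmax (Rabs (u - s)) (Rabs (t - u))) th) ->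
  exists Phi : R -> R -> R,
    (forall s u t, Phi s t = Phi s u + Phi u t + C s u t) /\
    (forall s t, Rabs (Phi s t) <= M / (Rpower 2 th - 2) * powR (Rabs (t - s)) th).
Proof.
  intros Hth HM Hcoc HC.
  set (g := fun s t => C s 0 t - C s 0 s).
  assert (Hg : forall s u t, g s t - g s u - g u t = C s u t).
  { apply cocycle_coboundary; [exact Hcoc|]. apply (cocycle_diag C M th); auto; lra. }
  assert (Hgd : forall a c t, a <= c <= t -> Rabs (g a t - g a c - g c t) <= M * powR (t - a) th).
  { intros a c t Hact. rewrite Hg. eapply Rle_trans; [apply HC|].
    apply Rmult_le_compat_l; [exact HM|]. apply powR_le_compat; [|lra].
    split; [apply Rmax_case; apply Rabs_pos|].
    rewrite !Rabs_right by lra. apply Rmax_lub; lra. }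
  destruct (germ_sewing_local g M th Hth HM Hgd) as [f [K [HK Hf]]].
  exists (fun s t => g s t - (f t - f s)). split.
  { intros s u t. rewrite <- (Hg s u t). ring. }
  apply (halving_bound th Hth _ M HM) with (K := K + M).
  - intros s t. destruct (midpoint_dist s t) as [E1 E2].
    set (m := (s + t) / 2) in *.
    replace (g s t - (f t - f s)) with ((g s m - (f m - f s)) + (g m t - (f t - f m)) + C s m t)
      by (rewrite <- (Hg s m t); ring).
    eapply Rle_trans; [apply Rabs_triang|]. apply Rplus_le_compat; [apply Rabs_triang|].
    eapply Rle_trans; [apply HC|]. rewrite E1, E2, Rmax_left by lra. lra.
  - intros s t Hst. assert (0 <= M * powR (Rabs (t - s)) th) by
      (apply Rmult_le_pos; [lra|apply powR_nonneg]).
    destruct (Rle_dec s t) as [Hle|Hlt].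
    + rewrite (Rabs_right (t - s)) in * by lra.
      replace (g s t - (f t - f s)) with (- (f t - f s - g s t)) by ring.
      rewrite Rabs_Ropp. pose proof (Hf s t ltac:(lra)). lra.
    + rewrite (Rabs_left (t - s)) in * by lra.
      assert (Hgs : g s s = 0) by (unfold g; ring).
      replace (g s t - (f t - f s)) with ((f s - f t - g t s) - C s t s)
        by (pose proof (Hg s t s); rewrite Hgs in *; lra).
      unfold Rminus at 1. eapply Rle_trans; [apply Rabs_triang|]. rewrite !Rabs_Ropp.
      pose proof (Hf t s ltac:(lra)). pose proof (HC s t s) as Hc.
      rewrite (Rabs_left (t - s)), (Rabs_right (s - t)), Rmax_right in Hc by lra.
      replace (s - t) with (- (t - s)) in * by ring. lra.
Qed.

Definition sewing_map (th : R) (C : R -> R -> R -> R) : R -> R -> R :=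
  epsilon (inhabits (fun _ _ : R => 0)) (fun Phi =>
    (forall s u t, Phi s t = Phi s u + Phi u t + C s u t) /\
    exists K, forall s t, Rabs (Phi s t) <= K * powR (Rabs (t - s)) th).

Lemma sewing_map_spec C M th : 1 < th -> 0 <= M -> cocycle C ->
  (forall s u t, Rabs (C s u t) <= M * powR (Rmax (Rabs (u - s)) (Rabs (t - u))) th) ->
  (forall s u t, sewing_map th C s t = sewing_map th C s u + sewing_map th C u t + C s u t) /\
  (forall s t, Rabs (sewing_map th C s t) <= M / (Rpower 2 th - 2) * powR (Rabs (t - s)) th).
Proof.
  intros Hth HM Hcoc HC. destruct (sewing C M th Hth HM Hcoc HC) as [Phi [HPhi HPhib]].
  destruct (epsilon_spec (inhabits (fun _ _ : R => 0)) (fun Phi =>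
    (forall s u t, Phi s t = Phi s u + Phi u t + C s u t) /\
    exists K, forall s t, Rabs (Phi s t) <= K * powR (Rabs (t - s)) th))
    as [Hadd [K HK]]; [exists Phi; split; [exact HPhi|]; eexists; exact HPhib|].
  fold (sewing_map th C) in Hadd, HK.
  assert (Heq : forall s t, sewing_map th C s t - Phi s t = 0).
  { apply (additive_eq0 th _ (K + M / (Rpower 2 th - 2)) Hth).
    - intros s u t. rewrite (Hadd s u t), (HPhi s u t). ring.
    - intros s t. replace (sewing_map th C s t - Phi s t) with (sewing_map th C s t + - Phi s t)
        by ring.
      eapply Rle_trans; [apply Rabs_triang|]. rewrite Rabs_Ropp.
      rewrite Rmult_plus_distr_r. pose proof (HK s t). pose proof (HPhib s t). lra. }
  split; [exact Hadd|]. intros s t. replace (sewing_map th C s t) with (Phi s t)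
    by (pose proof (Heq s t); lra). apply HPhib.
Qed.

(** * The extension *)

Lemma list_uniform_bound {T : Type} (l : list T) (P : T -> R -> Prop) :
  (forall x K K', K <= K' -> P x K -> P x K') ->
  (forall x, In x l -> exists K, P x K) ->
  exists K, 1 <= K /\ forall x, In x l -> P x K.
Proof.
  intros Hmono Hex. induction l as [|x l IH].
  - exists 1. split; [lra|]. intros x [].
  - destruct IH as [K [HK1 HK]]; [intros y Hy; apply Hex; now right|].
    destruct (Hex x (or_introl eq_refl)) as [Kx HKx].
    exists (Rmax K Kx). split; [eapply Rle_trans; [exact HK1|apply Rmax_l]|].
    intros y [<-|Hy]; eapply Hmono; [apply Rmax_r|exact HKx|apply Rmax_l|now apply HK].
Qed.

Section Extension.
Variable H : CHA.
Notation B := (cB H).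
Variables (gamma : R) (N : nat).
Hypothesis H_nondeg : nondegenerate H.
Hypothesis gamma_range : 0 < gamma <= 1.
Hypothesis N_floor : INR N <= / gamma < INR N + 1.
Variable Y : path H.
Hypothesis Y_rough : truncated_rough_path H gamma N Y.

Lemma theta_pos n : (1 <= n)%nat -> 0 < gamma * INR n.
Proof. intros Hn. apply Rmult_lt_0_compat; [lra|apply lt_0_INR; lia]. Qed.

Lemma theta_gt1 n : (N < n)%nat -> 1 < gamma * INR n.
Proof.
  intros Hn. assert (INR N + 1 <= INR n) by (rewrite <- S_INR; apply le_INR; lia).
  apply (Rmult_lt_reg_l (/ gamma)); [apply Rinv_0_lt_compat; lra|].
  rewrite <- Rmult_assoc, Rinv_l, Rmult_1_l, Rmult_1_r by lra. lra.
Qed.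

(* In degree [> N], Chen's relation says [X s t sg - X s u sg - X u t sg] is the reduced
   term [red (X s u) (X u t) sg] of lower degrees, so [X sg] has to be its sewing. *)
Fixpoint ext_fuel (k : nat) : path H :=
  match k with
  | O => Y
  | S k' => fun s t sg =>
      if Nat.leb (cdeg sg) N then Y s t sg
      else sewing_map (gamma * INR (cdeg sg))
             (fun s u t => red (ext_fuel k' s u) (ext_fuel k' u t) sg) s t
  end.

Definition ext : path H := fun s t sg => ext_fuel (cdeg sg) s t sg.

Lemma ext_fuel_low k s t sg : (cdeg sg <= N)%nat -> ext_fuel k s t sg = Y s t sg.
Proof.
  intros Hd. destruct k as [|k]; [reflexivity|]. simpl.
  now rewrite (proj2 (Nat.leb_le _ _) Hd).
Qed.

Lemma ext_low s t sg : (cdeg sg <= N)%nat -> ext s t sg = Y s t sg.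
Proof. apply ext_fuel_low. Qed.

Lemma ext_fuel_high k s t sg : (N < cdeg sg)%nat ->
  ext_fuel (S k) s t sg = sewing_map (gamma * INR (cdeg sg))
    (fun s u t => red (ext_fuel k s u) (ext_fuel k u t) sg) s t.
Proof. intros Hd. simpl. now rewrite (proj2 (Nat.leb_gt _ _) Hd). Qed.

Lemma ext_fuel_enough k sg s t : (cdeg sg <= k)%nat -> ext_fuel k s t sg = ext s t sg.
Proof.
  remember (cdeg sg) as d eqn:Ed. revert k sg s t Ed.
  induction d as [d IH] using lt_wf_ind. intros k sg s t Ed Hk.
  destruct (le_lt_dec d N) as [Hl|Hl]; [rewrite ext_fuel_low, ext_low by lia; reflexivity|].
  unfold ext. rewrite <- Ed. destruct k as [|k]; [lia|]. destruct d as [|d]; [lia|].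
  rewrite !ext_fuel_high by lia. f_equal.
  do 3 (apply functional_extensionality; intro). apply red_ext.
  intros a Ha.
  assert (Ea : forall j u v, (cdeg a <= j)%nat -> ext_fuel j u v a = ext u v a)
    by (intros j u v Hj; apply (IH (cdeg a)); [lia|reflexivity|exact Hj]).
  rewrite !Ea by lia. split; reflexivity.
Qed.

Lemma ext_high s t sg : (N < cdeg sg)%nat ->
  ext s t sg = sewing_map (gamma * INR (cdeg sg))
    (fun s u t => red (ext s u) (ext u t) sg) s t.
Proof.
  intros Hd. unfold ext at 1. destruct (cdeg sg) as [|d] eqn:E; [lia|].
  rewrite ext_fuel_high, E by lia. f_equal.
  do 3 (apply functional_extensionality; intro). apply red_ext.
  intros a Ha. split; apply ext_fuel_enough; lia.
Qed.

Lemma ext_cone s t : ext s t cone = 1.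
Proof. rewrite ext_low by (rewrite cdeg_cone; lia). apply Y_rough. Qed.

Lemma Y_chen sg s u t : (cdeg sg <= N)%nat -> Y s t sg = conv (Y s u) (Y u t) sg.
Proof.
  intros Hd. destruct Y_rough as [_ [_ [Hc _]]].
  rewrite <- (Hc s u t sg Hd). apply conv_graded_sum.
Qed.

Lemma ext_chen_low sg s u t : (cdeg sg <= N)%nat -> ext s t sg = conv (ext s u) (ext u t) sg.
Proof.
  intros Hd. rewrite ext_low, (Y_chen sg s u t) by exact Hd. apply conv_ext.
  intros a Ha. now rewrite !ext_low by lia.
Qed.

Lemma Y_diag sg s : (1 <= cdeg sg <= N)%nat -> Y s s sg = 0.
Proof.
  apply (conv_idempotent_eq0 (Y s s) N); [apply Y_rough|]. intros; now apply Y_chen.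
Qed.

Lemma Y_holder_uniform : exists c, 1 <= c /\
  forall sg, (1 <= cdeg sg <= N)%nat -> forall s t, s <> t ->
    Rabs (Y s t sg) <= c * qchar H sg * powR (Rabs (t - s)) (gamma * INR (cdeg sg)).
Proof.
  destruct (list_uniform_bound (@basis_le H N) (fun sg c => (1 <= cdeg sg <= N)%nat ->
    forall s t, s <> t ->
    Rabs (Y s t sg) <= c * qchar H sg * powR (Rabs (t - s)) (gamma * INR (cdeg sg))))
    as [c [Hc1 Hc]].
  - intros sg K K' HKK' HK Hd s t Hst. eapply Rle_trans; [now apply HK|].
    apply Rmult_le_compat_r; [apply powR_nonneg|].
    apply Rmult_le_compat_r; [apply qchar_nonneg|exact HKK'].
  - intros sg _. destruct (le_lt_dec 1 (cdeg sg)) as [H1|H1]; [|exists 0; intros; lia].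
    destruct (le_lt_dec (cdeg sg) N) as [H2|H2]; [|exists 0; intros; lia].
    destruct Y_rough as [_ [_ [_ Hh]]]. destruct (Hh sg H2) as [K HK].
    pose proof (qchar_pos sg H_nondeg H1) as Hq.
    exists (Rabs K / qchar H sg). intros _ s t Hst. eapply Rle_trans; [now apply HK|].
    apply Rmult_le_compat_r; [apply powR_nonneg|]. unfold Rdiv.
    rewrite Rmult_assoc, Rinv_l, Rmult_1_r by lra. apply Rle_abs.
  - exists c. split; [exact Hc1|]. intros sg Hd. apply Hc; [apply in_basis_le; lia|exact Hd].
Qed.

Section UniformBound.
Variable c : R.
Hypothesis c_ge1 : 1 <= c.
Hypothesis Y_bound : forall sg, (1 <= cdeg sg <= N)%nat -> forall s t, s <> t ->
  Rabs (Y s t sg) <= c * qchar H sg * powR (Rabs (t - s)) (gamma * INR (cdeg sg)).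

Notation qg := (qgamma H gamma N).

Lemma qg_nonneg sg : 0 <= qg sg.
Proof. apply qgamma_nonneg. intros n Hn. apply Rpower2_gt2, theta_gt1, Hn. Qed.

Lemma product_bound a b m x y Fa Gb : a <> cone -> b <> cone -> 0 <= x <= m -> 0 <= y <= m ->
  Rabs Fa <= c ^ cdeg a * qg a * powR x (gamma * INR (cdeg a)) ->
  Rabs Gb <= c ^ cdeg b * qg b * powR y (gamma * INR (cdeg b)) ->
  Rabs (Fa * Gb) <= qg a * qg b * (c ^ (cdeg a + cdeg b) * powR m (gamma * INR (cdeg a + cdeg b))).
Proof.
  intros Ha Hb Hx Hy HF HG. apply cdeg_ge1 in Ha, Hb.
  pose proof (theta_pos _ Ha). pose proof (theta_pos _ Hb).
  assert (Ca : 0 <= c ^ cdeg a * qg a) by (apply Rmult_le_pos; [apply pow_le; lra|apply qg_nonneg]).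
  assert (Cb : 0 <= c ^ cdeg b * qg b) by (apply Rmult_le_pos; [apply pow_le; lra|apply qg_nonneg]).
  assert (HF' : Rabs Fa <= c ^ cdeg a * qg a * powR m (gamma * INR (cdeg a))).
  { eapply Rle_trans; [exact HF|]. apply Rmult_le_compat_l; [exact Ca|]. apply powR_le_compat; lra. }
  assert (HG' : Rabs Gb <= c ^ cdeg b * qg b * powR m (gamma * INR (cdeg b))).
  { eapply Rle_trans; [exact HG|]. apply Rmult_le_compat_l; [exact Cb|]. apply powR_le_compat; lra. }
  rewrite Rabs_mult, pow_add, plus_INR, Rmult_plus_distr_l, powR_plus by lra.
  replace (qg a * qg b * (c ^ cdeg a * c ^ cdeg b *
     (powR m (gamma * INR (cdeg a)) * powR m (gamma * INR (cdeg b)))))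
    with ((c ^ cdeg a * qg a * powR m (gamma * INR (cdeg a))) *
          (c ^ cdeg b * qg b * powR m (gamma * INR (cdeg b)))) by ring.
  apply Rmult_le_compat; auto using Rabs_pos.
Qed.

Lemma ext_regular_low sg : (cdeg sg <= N)%nat -> forall s t,
  Rabs (ext s t sg) <= c ^ cdeg sg * qg sg * powR (Rabs (t - s)) (gamma * INR (cdeg sg)).
Proof.
  intros Hd s t. rewrite ext_low by exact Hd.
  rewrite qgamma_unfold, (proj2 (Nat.leb_le _ _) Hd).
  destruct (Nat.eq_dec (cdeg sg) 0) as [E|E].
  - apply cdeg_zero in E as ->. destruct Y_rough as [Y1 _].
    rewrite Y1, qchar_unfold, cdeg_cone, Rmult_0_r, powR_0_r. simpl. rewrite Rabs_R1. lra.
  - destruct (Req_dec s t) as [<-|Hst].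
    + rewrite Y_diag, Rabs_R0 by lia. apply Rmult_le_pos; [apply Rmult_le_pos|];
        [apply pow_le; lra|apply qchar_nonneg|apply powR_nonneg].
    + eapply Rle_trans; [apply Y_bound; [lia|exact Hst]|].
      apply Rmult_le_compat_r; [apply powR_nonneg|]. apply Rmult_le_compat_r; [apply qchar_nonneg|].
      destruct (cdeg sg) as [|n]; [lia|]. simpl. pose proof (pow_R1_Rle c n c_ge1). nra.
Qed.

Lemma ext_regular n : forall sg, cdeg sg = n ->
  (forall s u t, ext s t sg = conv (ext s u) (ext u t) sg) /\
  (forall s t, Rabs (ext s t sg) <= c ^ n * qg sg * powR (Rabs (t - s)) (gamma * INR n)).
Proof.
  induction n as [n IH] using lt_wf_ind. intros sg <-.
  destruct (le_lt_dec (cdeg sg) N) as [Hn|Hn].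
  { split; [intros; now apply ext_chen_low|now apply ext_regular_low]. }
  set (th := gamma * INR (cdeg sg)). pose proof (theta_gt1 _ Hn) as Hth.
  assert (Hsg : sg <> cone) by (intros ->; rewrite cdeg_cone in Hn; lia).
  set (C := fun s u t => red (ext s u) (ext u t) sg).
  set (M := c ^ cdeg sg * red qg qg sg).
  assert (HM : 0 <= M).
  { apply Rmult_le_pos; [apply pow_le; lra|]. apply red_nonneg. intros; apply qg_nonneg. }
  assert (Hcoc : cocycle C).
  { intros s u v t. apply red_cocycle; try apply ext_cone; [exact Hsg|].
    intros a Ha. split; apply (IH (cdeg a)); auto. }
  assert (HC : forall s u t, Rabs (C s u t) <= M * powR (Rmax (Rabs (u - s)) (Rabs (t - u))) th).
  { intros s u t. replace (M * _) with (red qg qg sg * (c ^ cdeg sg *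
      powR (Rmax (Rabs (u - s)) (Rabs (t - u))) (gamma * INR (cdeg sg)))) by (unfold M, th; ring).
    apply red_abs_le. intros a b Ha Hb Hab. rewrite <- Hab.
    pose proof (cdeg_ge1 a Ha). pose proof (cdeg_ge1 b Hb).
    apply (product_bound a b _ (Rabs (u - s)) (Rabs (t - u))); auto.
    - split; [apply Rabs_pos|apply Rmax_l].
    - split; [apply Rabs_pos|apply Rmax_r].
    - apply (IH (cdeg a)); [lia|reflexivity].
    - apply (IH (cdeg b)); [lia|reflexivity]. }
  destruct (sewing_map_spec C M th Hth HM Hcoc HC) as [Hadd Hbound].
  assert (Hext : forall s t, ext s t sg = sewing_map th C s t) by (intros; now apply ext_high).
  split.
  - intros s u t. rewrite conv_split, !ext_cone, !Hext, (Hadd s u t) by exact Hsg.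
    unfold C. ring.
  - intros s t. rewrite Hext. eapply Rle_trans; [apply Hbound|]. right. f_equal.
    rewrite (qgamma_unfold gamma N sg), (proj2 (Nat.leb_gt _ _) Hn). unfold M, th. field.
    pose proof (Rpower2_gt2 _ Hth). unfold th in *. lra.
Qed.

Lemma ext_multiplicative n : forall a b, (cdeg a + cdeg b)%nat = n ->
  forall s t, mul_defect (ext s t) a b = 0.
Proof.
  induction n as [n IH] using lt_wf_ind. intros a b Hab s t.
  destruct (cB_eq_dec a cone) as [->|Ha]; [apply mul_defect_cone_l, ext_cone|].
  destruct (cB_eq_dec b cone) as [->|Hb]; [apply mul_defect_cone_r, ext_cone|].
  destruct (le_lt_dec n N) as [Hn|Hn].
  - destruct Y_rough as [_ [Hmul _]]. unfold mul_defect.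
    rewrite (mul_eval_ext _ (Y s t)) by (intros z Hz; apply ext_low; lia).
    rewrite mul_eval_cenum, (Hmul s t a b) by (cbv beta; lia). rewrite !ext_low by lia. ring.
  - set (th := gamma * INR n). pose proof (theta_gt1 _ Hn) as Hth.
    apply (additive_eq0 th (fun s t => mul_defect (ext s t) a b)
      (mul_eval (fun z => c ^ n * qg z) a b + qg a * qg b * c ^ n)); [exact Hth| |].
    + intros s0 u t0. apply mul_defect_conv; try apply ext_cone.
      * intros z Hz. apply (ext_regular (cdeg z) z eq_refl).
      * intros x y Hxy. apply (IH (cdeg x + cdeg y)%nat); [lia|reflexivity].
      * intros x y Hxy. apply (IH (cdeg x + cdeg y)%nat); [lia|reflexivity].
    + intros s0 t0. unfold mul_defect. rewrite Rmult_plus_distr_r.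
      replace (mul_eval (ext s0 t0) a b - ext s0 t0 a * ext s0 t0 b)
        with (mul_eval (ext s0 t0) a b + - (ext s0 t0 a * ext s0 t0 b)) by ring.
      eapply Rle_trans; [apply Rabs_triang|]. rewrite Rabs_Ropp. apply Rplus_le_compat.
      * apply mul_eval_abs_le. intros z Hz. unfold th.
        replace n with (cdeg z) by lia. apply (ext_regular (cdeg z) z eq_refl).
      * unfold th. rewrite Rmult_assoc, <- Hab.
        apply (product_bound a b _ (Rabs (t0 - s0)) (Rabs (t0 - s0))); auto;
          [split; [apply Rabs_pos|lra]|split; [apply Rabs_pos|lra]| |];
          apply (ext_regular _ _ eq_refl).
Qed.

Lemma ext_unique_deg X' : rough_path H gamma X' -> extends H N X' Y ->
  forall n sg, cdeg sg = n -> forall s t, X' s t sg = ext s t sg.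
Proof.
  intros [X'1 [_ [X'chen X'hold]]] Hext n.
  induction n as [n IH] using lt_wf_ind. intros sg Hsg s t.
  destruct (le_lt_dec n N) as [Hn|Hn]; [rewrite Hext, ext_low by lia; reflexivity|].
  assert (Hcone : sg <> cone) by (intros ->; rewrite cdeg_cone in Hsg; lia).
  set (D := fun s t => X' s t sg - ext s t sg).
  assert (Hadd : forall s u t, D s t = D s u + D u t).
  { intros s0 u t0. unfold D.
    rewrite <- (X'chen s0 u t0 sg I), conv_graded_sum, (proj1 (ext_regular n sg Hsg) s0 u t0).
    rewrite !conv_split, !X'1, !ext_cone by exact Hcone.
    rewrite (red_ext (X' s0 u) (X' u t0) (ext s0 u) (ext u t0)); [ring|].
    intros a Ha. split; apply (IH (cdeg a)); auto; lia. }
  destruct (X'hold sg I) as [K HK].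
  pose proof (theta_gt1 n Hn) as Hth.
  apply Rminus_diag_uniq. apply (additive_eq0 (gamma * INR n) D (Rabs K + c ^ n * qg sg) Hth Hadd).
  intros s0 t0. destruct (Req_dec s0 t0) as [<-|Hst].
  - assert (D s0 s0 = 0) as -> by (pose proof (Hadd s0 s0 s0); lra). rewrite Rabs_R0.
    apply Rmult_le_pos; [|apply powR_nonneg].
    pose proof (Rabs_pos K). pose proof (qg_nonneg sg). pose proof (pow_le c n). nra.
  - unfold D. replace (X' s0 t0 sg - ext s0 t0 sg) with (X' s0 t0 sg + - ext s0 t0 sg) by ring.
    eapply Rle_trans; [apply Rabs_triang|]. rewrite Rabs_Ropp, Rmult_plus_distr_r.
    apply Rplus_le_compat.
    + eapply Rle_trans; [now apply HK|]. rewrite Hsg.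
      apply Rmult_le_compat_r; [apply powR_nonneg|apply Rle_abs].
    + rewrite Rmult_assoc. rewrite <- Rmult_assoc. apply (ext_regular n sg Hsg).
Qed.

End UniformBound.

Lemma ext_rough_path : rough_path H gamma ext.
Proof.
  destruct Y_holder_uniform as [c [Hc1 Hc]].
  split; [|split; [|split]].
  - apply ext_cone.
  - intros s t a b _. rewrite <- mul_eval_cenum.
    pose proof (ext_multiplicative c Hc1 Hc _ a b eq_refl s t). unfold mul_defect in *. lra.
  - intros s u t sg _. rewrite conv_graded_sum. symmetry.
    apply (ext_regular c Hc1 Hc _ sg eq_refl).
  - intros sg _. exists (c ^ cdeg sg * qgamma H gamma N sg). intros s t _.
    apply (ext_regular c Hc1 Hc _ sg eq_refl).
Qed.

Lemma ext_extends : extends H N ext Y.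
Proof. intros s t sg Hsg. now apply ext_low. Qed.

Lemma ext_unique X' : rough_path H gamma X' -> extends H N X' Y ->
  forall s t sg, X' s t sg = ext s t sg.
Proof.
  destruct Y_holder_uniform as [c [Hc1 Hc]]. intros HX' Hext s t sg.
  now apply (ext_unique_deg c Hc1 Hc X' HX' Hext (cdeg sg)).
Qed.

Lemma ext_qgamma_bound : exists c, 0 < c /\ forall s t sg,
  Rabs (ext s t sg) <= c ^ cdeg sg * qgamma H gamma N sg * powR (Rabs (t - s)) (gamma * INR (cdeg sg)).
Proof.
  destruct Y_holder_uniform as [c [Hc1 Hc]]. exists c. split; [lra|].
  intros s t sg. apply (ext_regular c Hc1 Hc _ sg eq_refl).
Qed.

End Extension.

Theorem mainTheorem3 (H : CHA) (gamma : R) (N : nat) :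
  commutativeCHA H -> nondegenerate H ->
  0 < gamma <= 1 ->
  INR N <= / gamma < INR N + 1 ->   (* N = floor(1/gamma) *)
  forall Y : path H, truncated_rough_path H gamma N Y ->
  exists X : path H,
    rough_path H gamma X /\ extends H N X Y /\
    (forall X' : path H, rough_path H gamma X' -> extends H N X' Y ->
       forall s t sg, X' s t sg = X s t sg) /\
    (exists c : R, 0 < c /\
       forall s t (sg : cB H),
         Rabs (X s t sg) <= c ^ (cdeg sg) * qgamma H gamma N sg
                            * powR (Rabs (t - s)) (gamma * INR (cdeg sg))).
Proof.
  intros _ Hnd Hgamma HN Y HY. exists (ext H gamma N Y).
  split; [|split; [|split]].
  - now apply ext_rough_path.
  - apply ext_extends.
  - now apply ext_unique.
  - now apply ext_qgamma_bound.
Qed.
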